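(* If $(\bar\lambda,\bar\mu)\in[\lambda_0,\infty)\times(0,\infty)$ satisfies $\Xi(\bar\lambda,\bar\mu)=0$, then $\Xi_\lambda(\bar\lambda,\bar\mu)>0$ and $\Xi_\mu(\bar\lambda,\bar\mu)<0$.
   Context: Setting: - $g>0$, $\sigma>0$, and $p_0<p_1<0$. - $\gamma=\gamma_1$ on $[p_0,p_1)$ and $\gamma=\gamma_2$ on $(p_1,0]$, with $\gamma_1\in C^\alpha([p_0,p_1])$ and $\gamma_2\in C^\alpha([p_1,0])$. - $\Gamma(p)=\int_0^p\gamma$, and $a(p;\lambda)=\sqrt{\lambda-2\Gamma(p)}$ for $\lambda>2\max_{[p_0,0]}\Gamma$. - $\mathfrak z(\cdot;\lambda,\mu)$ solves $(a^3\mathfrak z')'-\mu a\mathfrak z=0$ on $(p_0,0)$ with $\mathfrak z(p_0)=0$, $\mathfrak z'(p_0)=1$. - $\Xi(\lambda,\mu):=\lambda^{3/2}\mathfrak z'(0;\lambda,\mu)-(g+\sigma\mu)\mathfrak z(0;\lambda,\mu)$, a real-analytic function of $(\lambda,\mu)$; subscripts denote partial derivatives. - $\lambda_0$ is the unique $\lambda>2\max\Gamma$ with $\frac1g=\int_{p_0}^0a(p;\lambda)^{-3}dp$. *)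

From Stdlib Require Import Reals Lra ClassicalEpsilon.
Open Scope R_scope.

(* Oriented Riemann integral of f from a to b (well defined whenever f is
   Riemann integrable on [a,b]; RiemannInt does not depend on the proof). *)
Definition RInt (f : R -> R) (a b : R) : R :=
  epsilon (inhabits 0)
    (fun l => exists pr : Riemann_integrable f a b, RiemannInt pr = l).

Definition holder (alpha : R) (f : R -> R) (a b : R) : Prop :=
  exists C : R, forall x y, a <= x <= b -> a <= y <= b ->
    Rabs (f x - f y) <= C * Rpower (Rabs (x - y)) alpha.

(* gamma = gamma1 on [p0,p1), gamma2 on [p1,0] (value at p1 irrelevant). *)
Definition gam (p1 : R) (g1 g2 : R -> R) (p : R) : R :=
  if Rlt_dec p p1 then g1 p else g2 p.

Definition Gam (p1 : R) (g1 g2 : R -> R) (p : R) : R :=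
  RInt (gam p1 g1 g2) 0 p.

Definition aa (p1 : R) (g1 g2 : R -> R) (lam p : R) : R :=
  sqrt (lam - 2 * Gam p1 g1 g2 p).

(* lambda > 2 max_[p0,0] Gamma  (the max is attained, Gamma being continuous) *)
Definition admissible (p0 p1 : R) (g1 g2 : R -> R) (lam : R) : Prop :=
  forall p, p0 <= p <= 0 -> 2 * Gam p1 g1 g2 p < lam.

(* z (with derivative dz) solves (a^3 z')' - mu a z = 0 on (p0,0),
   z(p0) = 0, z'(p0) = 1; z and z' continuous on [p0,0] (so dz at the
   endpoints is the one-sided derivative). *)
Definition is_zsol (p0 : R) (a : R -> R) (mu : R) (z dz : R -> R) : Prop :=
  z p0 = 0 /\ dz p0 = 1 /\
  (forall p, p0 <= p <= 0 -> limit1_in z (fun x => p0 <= x <= 0) (z p) p) /\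
  (forall p, p0 <= p <= 0 -> limit1_in dz (fun x => p0 <= x <= 0) (dz p) p) /\
  (forall p, p0 < p < 0 -> derivable_pt_lim z p (dz p)) /\
  (forall p, p0 < p < 0 ->
     derivable_pt_lim (fun q => a q ^ 3 * dz q) p (mu * a p * z p)).

Definition Xi (g sigma : R) (z dz : R -> R -> R -> R) (lam mu : R) : R :=
  Rpower lam (3/2) * dz lam mu 0 - (g + sigma * mu) * z lam mu 0.

From Pilot Require Import Defs.
From Stdlib Require Import Reals Lra Psatz ClassicalEpsilon.
From Coquelicot Require Import Coquelicot.
Open Scope R_scope.

(* Both derivatives are computed from Green's identity:
   for two parameter values differing by h, Xi at the new value (times z(0))
   equals h times an integral of the two solutions, so the difference
   quotient of Xi converges to that integral for the limit solution once the
   solutions depend continuously (uniformly on [p0,0]) on the parameters;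
   this continuous dependence is a Gronwall estimate.  For lambda the limit
   integrand is mu z^2/(2a) + (3/2) a z'^2 > 0.  For mu the limit is
   (int a z^2 - sigma z(0)^2) / z(0), which is negative by the energy
   identity, the strict Cauchy-Schwarz inequality and int a^-3 <= 1/g
   (this is where lambda >= lambda0 enters); positivity of z, z' and of the
   flux a^3 z' comes from a monotone energy argument. *)

(* Specializations of Coquelicot's continuity rules to real functions; the
   generic forms do not unify reliably with goals on [R -> R]. *)

Lemma cont_mult (f g : R -> R) x :
  continuous f x -> continuous g x -> continuous (fun t => f t * g t) x.
Proof. intros; apply (continuous_mult f g x); auto. Qed.

Lemma cont_plus (f g : R -> R) x :
  continuous f x -> continuous g x -> continuous (fun t => f t + g t) x.
Proof. intros; apply (continuous_plus f g x); auto. Qed.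

Lemma cont_opp (f : R -> R) x : continuous f x -> continuous (fun t => - f t) x.
Proof. intros; apply (continuous_opp f x); auto. Qed.

Lemma cont_minus (f g : R -> R) x :
  continuous f x -> continuous g x -> continuous (fun t => f t - g t) x.
Proof. intros; apply (continuous_minus f g x); auto. Qed.

Lemma cont_const (c x : R) : continuous (fun _ : R => c) x.
Proof. apply continuous_const. Qed.

Lemma cont_pow (f : R -> R) n x : continuous f x -> continuous (fun t => f t ^ n) x.
Proof. intros H; induction n; simpl; [apply cont_const | apply cont_mult; auto]. Qed.

Lemma cont_inv (f : R -> R) x :
  continuous f x -> f x <> 0 -> continuous (fun t => / f t) x.
Proof. intros; apply continuous_Rinv_comp; auto. Qed.

Ltac cont := repeat (match goal with
 | |- continuous (fun _ => ?c) _ => apply cont_const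
 | |- continuous (fun t => _ * _) _ => apply cont_mult
 | |- continuous (fun t => _ + _) _ => apply cont_plus
 | |- continuous (fun t => _ - _) _ => apply cont_minus
 | |- continuous (fun t => - _) _ => apply cont_opp
 | |- continuous (fun t => _ ^ _) _ => apply cont_pow
 | |- continuous (fun t => / _) _ => apply cont_inv
 end); auto.

Lemma continuous_continuity_pt (f : R -> R) x : continuous f x <-> continuity_pt f x.
Proof. split; intro H; apply continuity_pt_filterlim; exact H. Qed.

Lemma continuous_eps_delta (f : R -> R) x0 :
  continuous f x0 <-> forall eps, 0 < eps -> exists d, 0 < d /\
    forall x, Rabs (x - x0) < d -> Rabs (f x - f x0) < eps.
Proof.
  rewrite continuous_continuity_pt. split.
  - intros H eps He. destruct (H eps He) as [d [Hd Hx]]. exists d; split; auto.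
    intros x Hxd. destruct (Req_dec x x0) as [->|Hne].
    + rewrite Rminus_diag, Rabs_R0; auto.
    + apply (Hx x). split; [split; [exact I | auto] | exact Hxd].
  - intros H eps He. destruct (H eps He) as [d [Hd H']].
    exists d. split; auto. intros y [_ Hy]. apply H'. exact Hy.
Qed.

Lemma bounded_on_interval (f : R -> R) a b : a <= b -> (forall x, continuous f x) ->
  exists M, 0 <= M /\ forall x, a <= x <= b -> Rabs (f x) <= M.
Proof.
  intros Hab Hc. destruct (continuity_ab_maj (fun x => Rabs (f x)) a b) as [M [HM _]]; auto.
  { intros c _. apply continuous_continuity_pt, continuous_Rabs_comp. auto. }
  exists (Rabs (f M)). split; [apply Rabs_pos | auto].
Qed.

Lemma positive_lower_bound (f : R -> R) a b : a <= b -> (forall x, continuous f x) ->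
  (forall x, a <= x <= b -> 0 < f x) -> exists m, 0 < m /\ forall x, a <= x <= b -> m <= f x.
Proof.
  intros Hab Hc Hpos. destruct (continuity_ab_min f a b) as [x [Hx Hx2]]; auto.
  { intros c _. apply continuous_continuity_pt; auto. }
  exists (f x). split; auto.
Qed.

Lemma ex_RInt_cont (f : R -> R) a b : (forall x, continuous f x) -> ex_RInt f a b.
Proof. intros; apply (@ex_RInt_continuous R_CompleteNormedModule); auto. Qed.

Lemma RInt_plusR (f g : R -> R) a b : ex_RInt f a b -> ex_RInt g a b ->
  @eq R (RInt (fun x => f x + g x) a b) (RInt f a b + RInt g a b).
Proof. intros; apply (RInt_plus f g); auto. Qed.

Lemma RInt_minusR (f g : R -> R) a b : ex_RInt f a b -> ex_RInt g a b ->
  @eq R (RInt (fun x => f x - g x) a b) (RInt f a b - RInt g a b).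
Proof. intros; apply (RInt_minus f g); auto. Qed.

Lemma RInt_scalR (f : R -> R) a b l : ex_RInt f a b ->
  @eq R (RInt (fun x => l * f x) a b) (l * RInt f a b).
Proof. intros; apply (RInt_scal f); auto. Qed.

Lemma RInt_extR (f g : R -> R) a b : (forall x, f x = g x) -> @eq R (RInt f a b) (RInt g a b).
Proof. intros H; apply RInt_ext; intros; apply H. Qed.

Lemma Defs_RInt_eq (f : R -> R) a b : ex_RInt f a b -> Defs.RInt f a b = RInt f a b.
Proof.
  intro H. unfold Defs.RInt.
  destruct (epsilon_spec (inhabits 0)
    (fun l => exists pr : Riemann_integrable f a b, RiemannInt pr = l)) as [pr Hpr].
  { exists (RiemannInt (ex_RInt_Reals_0 _ _ _ H)). eexists; reflexivity. }
  rewrite <- Hpr. symmetry. apply RInt_Reals.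
Qed.

Lemma derive_cont (f : R -> R) x l : is_derive f x l -> continuous f x.
Proof. intros H. apply (@ex_derive_continuous R_AbsRing R_NormedModule). exists l; exact H. Qed.

Lemma derive_const (c x : R) : is_derive (fun _ : R => c) x 0.
Proof. apply (@is_derive_const R_AbsRing R_NormedModule). Qed.

Lemma derive_plus (f g : R -> R) x a b :
  is_derive f x a -> is_derive g x b -> is_derive (fun t => f t + g t) x (a + b).
Proof. intros; apply (is_derive_plus f g); auto. Qed.

Lemma derive_minus (f g : R -> R) x a b :
  is_derive f x a -> is_derive g x b -> is_derive (fun t => f t - g t) x (a - b).
Proof. intros; apply (is_derive_minus f g); auto. Qed.

Lemma derive_opp (f : R -> R) x a : is_derive f x a -> is_derive (fun t => - f t) x (- a).
Proof. intros; apply (is_derive_opp f); auto. Qed.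

Lemma derive_mult (f g : R -> R) x a b : is_derive f x a -> is_derive g x b ->
  is_derive (fun t => f t * g t) x (a * g x + f x * b).
Proof. intros; apply Derive.is_derive_mult; auto. Qed.

Lemma derive_eq (f : R -> R) x a b : is_derive f x a -> a = b -> is_derive f x b.
Proof. intros; subst; auto. Qed.

Lemma derive_locally_const (f : R -> R) x d : 0 < d ->
  (forall y, Rabs (y - x) < d -> f y = f x) -> is_derive f x 0.
Proof.
  intros Hd H. apply (is_derive_ext_loc (fun _ => f x)).
  - exists (mkposreal d Hd). intros y Hy. symmetry. apply H. exact Hy.
  - apply derive_const.
Qed.

Lemma ftc (F f : R -> R) (a b : R) : a <= b ->
  (forall x, continuous F x) -> (forall x, continuous f x) ->
  (forall x, a < x < b -> is_derive F x (f x)) ->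
  @eq R (RInt f a b) (F b - F a).
Proof.
  intros Hab HF Hf Hd.
  assert (HI : forall x, is_derive (fun t => RInt f a t) x (f x)).
  { intros x. apply (is_derive_RInt f (fun t => RInt f a t) a x); auto.
    apply filter_forall. intros y. apply (@RInt_correct R_CompleteNormedModule).
    apply ex_RInt_cont; auto. }
  set (G := fun x => F x - RInt f a x).
  destruct (MVT_gen G a b (fun _ => 0)) as [c [Hc HG]].
  - intros x Hx. rewrite Rmin_left in Hx by lra. rewrite Rmax_right in Hx by lra.
    unfold G. replace 0 with (f x - f x) by ring. apply derive_minus; auto.
  - intros x _. apply continuous_continuity_pt. unfold G. apply cont_minus; auto.
    eapply derive_cont. apply HI.
  - unfold G in HG. rewrite RInt_point in HG. unfold zero in HG; simpl in HG. lra.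
Qed.

Lemma nondecreasing_of_deriv (F f : R -> R) a b : a <= b ->
  (forall x, a <= x <= b -> continuous F x) ->
  (forall x, a < x < b -> is_derive F x (f x)) ->
  (forall x, a <= x <= b -> 0 <= f x) -> F a <= F b.
Proof.
  intros Hab HF Hd Hp.
  destruct (MVT_gen F a b f) as [c [Hc HG]].
  - intros x Hx. rewrite Rmin_left in Hx by lra. rewrite Rmax_right in Hx by lra. auto.
  - intros x Hx. rewrite Rmin_left in Hx by lra. rewrite Rmax_right in Hx by lra.
    apply continuous_continuity_pt; auto.
  - rewrite Rmin_left in Hc by lra. rewrite Rmax_right in Hc by lra.
    specialize (Hp c Hc). nra.
Qed.

Lemma RInt_pos_of_pos_point (f : R -> R) a b x0 : a < b -> (forall x, continuous f x) ->
  (forall x, a <= x <= b -> 0 <= f x) -> a <= x0 <= b -> 0 < f x0 -> 0 < RInt f a b.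
Proof.
  intros Hab Hc Hp Hx0 Hf0.
  destruct (proj1 (continuous_eps_delta f x0) (Hc x0) (f x0 / 2)) as [d [Hd Hball]]; [lra|].
  set (c := Rmax a (x0 - d/2)). set (e := Rmin b (x0 + d/2)).
  assert (Hac : a <= c) by apply Rmax_l. assert (Heb : e <= b) by apply Rmin_l.
  assert (Hc1 : x0 - d/2 <= c) by apply Rmax_r. assert (He1 : e <= x0 + d/2) by apply Rmin_r.
  assert (Hce : c < e) by (unfold c, e; apply Rmax_lub_lt; apply Rmin_glb_lt; lra).
  rewrite <- (RInt_Chasles f a c b), <- (RInt_Chasles f c e b) by (apply ex_RInt_cont; auto).
  unfold plus; simpl.
  assert (0 <= RInt f a c) by (apply RInt_ge_0; auto; [apply ex_RInt_cont; auto | intros; apply Hp; lra]).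
  assert (0 <= RInt f e b) by (apply RInt_ge_0; auto; [apply ex_RInt_cont; auto | intros; apply Hp; lra]).
  assert (0 < RInt f c e).
  { apply RInt_gt_0; auto. intros x Hx.
    assert (Rabs (x - x0) < d) by (apply Rabs_def1; lra).
    specialize (Hball x H1). apply Rabs_def2 in Hball. lra. }
  lra.
Qed.

(* Proof: expand
   0 < int w (f - c)^2 with c the weighted mean of f. *)
Lemma strict_cauchy_schwarz (w f : R -> R) a b x1 x2 : a < b ->
  (forall x, continuous w x) -> (forall x, continuous f x) ->
  (forall x, a <= x <= b -> 0 < w x) -> a <= x1 <= b -> a <= x2 <= b -> f x1 <> f x2 ->
  RInt (fun x => w x * f x) a b ^ 2 < RInt w a b * RInt (fun x => w x * f x ^ 2) a b.
Proof.
  intros Hab Hw Hf Hpos Hx1 Hx2 Hne.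
  set (I := RInt w a b : R). set (S := RInt (fun x => w x * f x) a b : R).
  set (Q := RInt (fun x => w x * f x ^ 2) a b : R).
  assert (HI : 0 < I) by (apply (RInt_pos_of_pos_point _ a b a); auto; try lra;
    [intros; left; auto | apply Hpos; lra]).
  set (c := S / I).
  assert (Hx0 : exists x0, a <= x0 <= b /\ f x0 <> c).
  { destruct (Req_dec (f x1) c); [exists x2 | exists x1]; split; auto; lra. }
  destruct Hx0 as [x0 [Hx0 Hx0c]].
  assert (Hvar : 0 < RInt (fun x => w x * (f x - c) ^ 2) a b).
  { apply (RInt_pos_of_pos_point _ a b x0); auto.
    - intros; cont.
    - intros x Hx. apply Rmult_le_pos; [left; auto | apply pow2_ge_0].
    - apply Rmult_lt_0_compat; auto. apply pow2_gt_0. lra. }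
  rewrite (RInt_extR _ (fun x => (w x * f x ^ 2 - 2 * c * (w x * f x)) + c ^ 2 * w x)) in Hvar
    by (intros; ring).
  rewrite RInt_plusR, RInt_minusR, !RInt_scalR in Hvar by (apply ex_RInt_cont; intros; cont).
  fold I S Q in Hvar. unfold c in Hvar.
  apply (Rmult_lt_reg_r (/ I)). apply Rinv_0_lt_compat; auto.
  replace (I * Q * / I) with Q by (field; lra).
  replace (Q - 2 * (S / I) * S + (S / I) ^ 2 * I) with (Q - S ^ 2 * / I) in Hvar by (field; lra).
  lra.
Qed.

Lemma gronwall (F F' : R -> R) a b K c F0 : a <= b -> 0 < K -> 0 <= c -> 0 <= F0 ->
  (forall x, continuous F x) -> F a <= F0 ->
  (forall x, a < x < b -> is_derive F x (F' x)) ->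
  (forall x, a <= x <= b -> F' x <= K * F x + c) ->
  forall x, a <= x <= b -> F x <= (F0 + c / K) * exp (K * (b - a)).
Proof.
  intros Hab HK Hc HF0 HF Ha Hd Hb x Hx.
  (* Phi = -(F + c/K) e^{-K(t-a)} is nondecreasing. *)
  set (Phi := fun t => - ((F t + c / K) * exp (- K * (t - a)))).
  assert (Hexp_deriv : forall t, is_derive (fun t => exp (- K * (t - a))) t (- K * exp (- K * (t - a)))).
  { intros t. auto_derive; auto. unfold Rminus. ring. }
  assert (Hm : Phi a <= Phi x).
  { apply (nondecreasing_of_deriv Phi (fun t => (K * F t + c - F' t) * exp (- K * (t - a))) a x);
      try lra.
    - intros t _. unfold Phi. cont. eapply derive_cont. apply Hexp_deriv.
    - intros t Ht. unfold Phi.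
      assert (HdF : is_derive (fun t => F t + c / K) t (F' t)).
      { apply (derive_eq _ _ (F' t + 0)).
        - apply derive_plus; [apply Hd; lra | apply derive_const].
        - apply Rplus_0_r. }
      eapply derive_eq. apply derive_opp, derive_mult; [exact HdF | apply Hexp_deriv].
      simpl. field. lra.
    - intros t Ht. apply Rmult_le_pos; [specialize (Hb t ltac:(lra)); lra | apply Rlt_le, exp_pos]. }
  unfold Phi in Hm. rewrite Rminus_diag, Rmult_0_r, exp_0 in Hm.
  assert (Hex : exp (- K * (x - a)) * exp (K * (x - a)) = 1).
  { rewrite <- exp_plus. replace (- K * (x - a) + K * (x - a)) with 0 by ring. apply exp_0. }
  assert (HE1 : exp (K * (x - a)) <= exp (K * (b - a))).
  { destruct (Req_dec x b) as [->|]; [lra | left; apply exp_increasing; nra]. }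
  assert (Hpos := exp_pos (K * (x - a))). assert (Hpos2 := exp_pos (- K * (x - a))).
  assert (HcK : 0 <= c / K) by (apply Rmult_le_pos; [lra | left; apply Rinv_0_lt_compat; lra]).
  assert (H1 : F x + c / K <= (F0 + c / K) * exp (K * (x - a))).
  { apply (Rmult_le_reg_r (exp (- K * (x - a)))); auto.
    replace ((F0 + c / K) * exp (K * (x - a)) * exp (- K * (x - a))) with (F0 + c / K)
      by (rewrite Rmult_assoc, (Rmult_comm (exp _)), Hex; ring).
    lra. }
  assert ((F0 + c / K) * exp (K * (x - a)) <= (F0 + c / K) * exp (K * (b - a)))
    by (apply Rmult_le_compat_l; lra).
  lra.
Qed.

(* [ode_sol p0 A mu Z D]: Z, with derivative D, solves the Sturm-Liouville
   problem (A^3 Z')' = mu A Z on (p0,0) with Z(p0) = 0, Z'(p0) = 1.  All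
   functions are continuous on all of R (solutions given on [p0,0] are
   extended constantly outside, see [clamp]) and the coefficient A is
   positive. *)
Definition ode_sol (p0 : R) (A : R -> R) (mu : R) (Z D : R -> R) : Prop :=
  (forall x, continuous A x) /\ (forall x, 0 < A x) /\
  (forall x, continuous Z x) /\ (forall x, continuous D x) /\
  Z p0 = 0 /\ D p0 = 1 /\
  (forall p, p0 < p < 0 -> is_derive Z p (D p)) /\
  (forall p, p0 < p < 0 -> is_derive (fun q => A q ^ 3 * D q) p (mu * A p * Z p)).

Section Positivity.

Variables (p0 mu : R) (A Z D : R -> R).
Hypotheses (Hmu : 0 <= mu) (HS : ode_sol p0 A mu Z D).

Lemma energy_deriv p : p0 < p < 0 ->
  is_derive (fun q => A q ^ 3 * D q * Z q) p (mu * A p * Z p ^ 2 + A p ^ 3 * D p ^ 2).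
Proof.
  intros Hp. destruct HS as (_ & _ & _ & _ & _ & _ & HdZ & HdW).
  eapply derive_eq. apply derive_mult; [apply HdW | apply HdZ]; auto. simpl. ring.
Qed.

Lemma energy_deriv_nonneg p :
  0 <= mu * A p * Z p ^ 2 + A p ^ 3 * D p ^ 2.
Proof.
  destruct HS as (_ & HAp & _). assert (0 < A p) by auto.
  apply Rplus_le_le_0_compat; apply Rmult_le_pos; try apply pow2_ge_0.
  - apply Rmult_le_pos; lra.
  - left; apply pow_lt; auto.
Qed.

Lemma energy_mono s t : p0 <= s <= t -> t <= 0 ->
  A s ^ 3 * D s * Z s <= A t ^ 3 * D t * Z t.
Proof.
  intros Hs Ht. pose proof HS as (HA & _ & HZ & HD & _).
  apply (nondecreasing_of_deriv (fun q => A q ^ 3 * D q * Z q)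
    (fun q => mu * A q * Z q ^ 2 + A q ^ 3 * D q ^ 2) s t); try lra.
  - intros; cont.
  - intros; apply energy_deriv; lra.
  - intros; apply energy_deriv_nonneg.
Qed.

(* The flux A^3 Z' stays positive on [p0,0]: at a first zero s of the flux the
   energy would vanish, hence be identically 0 on [p0,s]; then Z' = 0 on
   (p0,s), contradicting the positivity of the flux near p0. *)
Lemma flux_pos x : p0 <= x <= 0 -> 0 < A x ^ 3 * D x.
Proof.
  pose proof HS as (HA & HAp & HZ & HD & HZ0 & HD0 & _).
  set (W := fun q => A q ^ 3 * D q).
  assert (HWc : forall x, continuous W x) by (intros; unfold W; cont).
  assert (HWp0 : 0 < W p0) by (unfold W; rewrite HD0, Rmult_1_r; apply pow_lt; auto).
  intros Hx. apply Rnot_le_lt. intros Hneg. change (W x <= 0) in Hneg.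
  assert (Hpx : p0 < x) by (destruct (Req_dec x p0) as [->|]; lra).
  assert (Hs : exists s, p0 < s <= x /\ W s = 0).
  { destruct (Req_dec (W x) 0) as [E|NE]; [exists x; split; [lra | auto] |].
    destruct (IVT (fun t => - W t) p0 x) as [s [Hs1 Hs2]]; try lra.
    - intros t. apply continuous_continuity_pt. cont.
    - assert (s <> p0) by (intros ->; lra). exists s. split; [split|]; lra. }
  destruct Hs as [s [Hs Hws]].
  assert (HV0 : forall t, p0 <= t <= s -> A t ^ 3 * D t * Z t = 0).
  { intros t Ht. apply Rle_antisym.
    - replace 0 with (W s * Z s) by (rewrite Hws; ring). apply energy_mono; lra.
    - replace 0 with (A p0 ^ 3 * D p0 * Z p0) by (rewrite HZ0; ring). apply energy_mono; lra. }
  destruct (proj1 (continuous_eps_delta W p0) (HWc p0) (W p0 / 2)) as [d [Hd Hball]]; [lra|].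
  set (r := Rmin d (s - p0) / 2).
  assert (Hr : 0 < r /\ r < d /\ r < s - p0).
  { assert (Rmin d (s - p0) <= d) by apply Rmin_l. assert (Rmin d (s - p0) <= s - p0) by apply Rmin_r.
    assert (0 < Rmin d (s - p0)) by (apply Rmin_glb_lt; lra). unfold r; lra. }
  set (t := p0 + r).
  assert (HWt : 0 < W t).
  { assert (Rabs (t - p0) < d) by (unfold t; rewrite Rabs_right; lra).
    specialize (Hball t H). apply Rabs_def2 in Hball. lra. }
  assert (Hflat : is_derive (fun q => A q ^ 3 * D q * Z q) t 0).
  { apply (derive_locally_const _ t (Rmin r (s - t))).
    - apply Rmin_glb_lt; unfold t; lra.
    - intros y Hy. assert (Rmin r (s - t) <= r) by apply Rmin_l.
      assert (Rmin r (s - t) <= s - t) by apply Rmin_r. apply Rabs_def2 in Hy.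
      rewrite !HV0; unfold t in *; lra. }
  assert (E := is_derive_unique _ _ _ (energy_deriv t ltac:(unfold t; lra))).
  rewrite (is_derive_unique _ _ _ Hflat) in E.
  assert (0 < A t) by auto. assert (0 < A t ^ 3) by (apply pow_lt; auto).
  assert (0 <= mu * A t * Z t ^ 2) by (apply Rmult_le_pos; [apply Rmult_le_pos; lra | apply pow2_ge_0]).
  assert (0 <= A t ^ 3 * D t ^ 2) by (apply Rmult_le_pos; [lra | apply pow2_ge_0]).
  assert (HD2 : A t ^ 3 * D t * D t = 0) by nra.
  unfold W in HWt. nra.
Qed.

Lemma deriv_pos x : p0 <= x <= 0 -> 0 < D x.
Proof.
  intros Hx. pose proof (flux_pos x Hx) as H. destruct HS as (_ & HAp & _).
  assert (0 < A x ^ 3) by (apply pow_lt; auto). nra.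
Qed.

Lemma sol_nonneg x : p0 <= x <= 0 -> 0 <= Z x.
Proof.
  intros Hx. pose proof HS as (HA & HAp & HZ & HD & HZ0 & HD0 & HdZ & HdW).
  rewrite <- HZ0. apply (nondecreasing_of_deriv Z D); try lra.
  - intros; auto.
  - intros; apply HdZ; lra.
  - intros; left; apply deriv_pos; lra.
Qed.

Lemma sol_end_pos : p0 < 0 -> 0 < Z 0.
Proof.
  intros Hp0.
  pose proof HS as (HA & HAp & HZ & HD & HZ0 & HD0 & HdZ & HdW).
  destruct (MVT_gen Z p0 0 D) as [c [Hc HM]].
  - intros x Hx. rewrite Rmin_left in Hx by lra. rewrite Rmax_right in Hx by lra. auto.
  - intros x Hx. apply continuous_continuity_pt; auto.
  - rewrite Rmin_left in Hc by lra. rewrite Rmax_right in Hc by lra.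
    pose proof (deriv_pos c Hc). rewrite HZ0 in HM. nra.
Qed.

(* For mu > 0 the flux strictly increases across [p0,0], its derivative
   mu A Z being nonnegative and positive at 0. *)
Lemma flux_increases : 0 < mu -> p0 < 0 -> A p0 ^ 3 * D p0 < A 0 ^ 3 * D 0.
Proof.
  intros Hmu' Hp0. pose proof HS as (HA & HAp & HZ & HD & _ & _ & _ & HdW).
  assert (E : RInt (fun q => mu * A q * Z q) p0 0 = A 0 ^ 3 * D 0 - A p0 ^ 3 * D p0).
  { apply (ftc (fun q => A q ^ 3 * D q)); try lra; intros; [cont | cont | apply HdW; auto]. }
  assert (0 < RInt (fun q => mu * A q * Z q) p0 0); [| lra].
  apply (RInt_pos_of_pos_point _ p0 0 0); try lra.
  - intros; cont.
  - intros x Hx. pose proof (sol_nonneg x Hx). specialize (HAp x).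
    apply Rmult_le_pos; [apply Rmult_le_pos |]; lra.
  - pose proof sol_end_pos Hp0. specialize (HAp 0).
    apply Rmult_lt_0_compat; [apply Rmult_lt_0_compat |]; auto.
Qed.

End Positivity.

Lemma green_identity p0 (A1 : R -> R) mu1 (Z1 D1 A2 : R -> R) mu2 (Z2 D2 : R -> R) :
  p0 < 0 -> ode_sol p0 A1 mu1 Z1 D1 -> ode_sol p0 A2 mu2 Z2 D2 ->
  A1 0 ^ 3 * D1 0 * Z2 0 - A2 0 ^ 3 * D2 0 * Z1 0 =
  RInt (fun q => (mu1 * A1 q - mu2 * A2 q) * Z1 q * Z2 q
                 + (A1 q ^ 3 - A2 q ^ 3) * D1 q * D2 q) p0 0.
Proof.
  intros Hp HS1 HS2.
  pose proof HS1 as (HA1 & _ & HZ1 & HD1 & HZ01 & _ & HdZ1 & HdW1).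
  pose proof HS2 as (HA2 & _ & HZ2 & HD2 & HZ02 & _ & HdZ2 & HdW2).
  rewrite (ftc (fun q => A1 q ^ 3 * D1 q * Z2 q - A2 q ^ 3 * D2 q * Z1 q)).
  - rewrite HZ01, HZ02. ring.
  - lra.
  - intros x. cont.
  - intros x. cont.
  - intros x Hx. eapply derive_eq.
    + apply derive_minus; apply derive_mult;
        [apply HdW1 | apply HdZ2 | apply HdW2 | apply HdZ1]; auto.
    + simpl. ring.
Qed.

(* Energy identity: multiplying the equation by Z and integrating by parts,
   mu int A Z^2 + int A^3 Z'^2 = A(0)^3 Z'(0) Z(0). *)
Lemma energy_identity p0 (A : R -> R) mu (Z D : R -> R) : p0 < 0 -> ode_sol p0 A mu Z D ->
  mu * RInt (fun q => A q * Z q ^ 2) p0 0 + RInt (fun q => A q ^ 3 * D q ^ 2) p0 0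
  = A 0 ^ 3 * D 0 * Z 0.
Proof.
  intros Hp HS. pose proof HS as (HA & _ & HZ & HD & HZ0 & _).
  rewrite <- RInt_scalR, <- RInt_plusR by (apply ex_RInt_cont; intros; cont).
  rewrite (RInt_extR _ (fun q => mu * A q * Z q ^ 2 + A q ^ 3 * D q ^ 2)) by (intros; ring).
  rewrite (ftc (fun q => A q ^ 3 * D q * Z q)); try lra.
  - rewrite HZ0. ring.
  - intros; cont.
  - intros; cont.
  - intros; apply (energy_deriv p0 mu A Z D HS); auto.
Qed.

(* If Xi(lambda,mu) = 0, i.e. A(0)^3 Z'(0) = (g + sigma mu) Z(0),
   and int A^-3 <= 1/g (which holds for lambda >= lambda0), then
   int A Z^2 - sigma Z(0)^2 < 0.  By the energy identity
   mu (int A Z^2 - sigma Z(0)^2) = g Z(0)^2 - int A^3 Z'^2, and the strict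
   Cauchy-Schwarz inequality applied to Z(0) = int A^-3 (A^3 Z') gives
   Z(0)^2 < (int A^-3) (int A^3 Z'^2) <= (1/g) int A^3 Z'^2. *)
Lemma mu_coefficient_neg p0 (A : R -> R) mu (Z D : R -> R) g sigma :
  p0 < 0 -> 0 < mu -> 0 < g -> ode_sol p0 A mu Z D ->
  A 0 ^ 3 * D 0 = (g + sigma * mu) * Z 0 ->
  RInt (fun q => / A q ^ 3) p0 0 <= / g ->
  RInt (fun q => A q * Z q ^ 2) p0 0 - sigma * Z 0 ^ 2 < 0.
Proof.
  intros Hp Hmu Hg HS Hbc HI.
  pose proof HS as (HA & HAp & HZ & HD & HZ0 & HD0 & HdZ & HdW).
  assert (HA3 : forall x, 0 < A x ^ 3) by (intros; apply pow_lt; auto).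
  assert (HZ0p : 0 < Z 0) by (apply (sol_end_pos p0 mu A Z D); auto; lra).
  set (I := RInt (fun q => / A q ^ 3) p0 0 : R).
  set (J := RInt (fun q => A q ^ 3 * D q ^ 2) p0 0 : R).
  set (K := RInt (fun q => A q * Z q ^ 2) p0 0 : R).
  assert (HJ : 0 <= J).
  { apply RInt_ge_0; try lra. apply ex_RInt_cont; intros; cont.
    intros; apply Rmult_le_pos; [left; auto | apply pow2_ge_0]. }
  assert (Hflux : A p0 ^ 3 * D p0 <> A 0 ^ 3 * D 0)
    by (apply Rlt_not_eq, (flux_increases p0 mu A Z D); auto; lra).
  assert (HCS := strict_cauchy_schwarz (fun q => / A q ^ 3) (fun q => A q ^ 3 * D q) p0 0 p0 0
    ltac:(lra) ltac:(intros x; cont; apply Rgt_not_eq, HA3) ltac:(intros; cont)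
    ltac:(intros; apply Rinv_0_lt_compat; auto) ltac:(lra) ltac:(lra) Hflux).
  cbv beta in HCS.
  rewrite (RInt_extR (fun q => / A q ^ 3 * (A q ^ 3 * D q)) D),
    (RInt_extR (fun q => / A q ^ 3 * (A q ^ 3 * D q) ^ 2) (fun q => A q ^ 3 * D q ^ 2)) in HCS
    by (intros x; field; apply Rgt_not_eq, HAp).
  rewrite (ftc Z D), HZ0, Rminus_0_r in HCS by (auto; lra).
  fold I J in HCS.
  assert (HgZ : g * Z 0 ^ 2 < J).
  { assert (I * J <= / g * J) by (apply Rmult_le_compat_r; auto).
    apply Rlt_le_trans with (g * (I * J)); [apply Rmult_lt_compat_l; auto |].
    apply Rle_trans with (g * (/ g * J)); [apply Rmult_le_compat_l; lra | right; field; lra]. }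
  assert (HE := energy_identity p0 A mu Z D Hp HS). fold K J in HE.
  rewrite Hbc in HE.
  assert (mu * (K - sigma * Z 0 ^ 2) < 0) by nra.
  fold K. nra.
Qed.

Definition near0 (P : R -> Prop) : Prop :=
  exists d, 0 < d /\ forall h, 0 < Rabs h < d -> P h.

Lemma near0_and (P Q : R -> Prop) : near0 P -> near0 Q -> near0 (fun h => P h /\ Q h).
Proof.
  intros [d1 [Hd1 H1]] [d2 [Hd2 H2]]. exists (Rmin d1 d2). split; [apply Rmin_glb_lt; auto|].
  intros h Hh. assert (Rmin d1 d2 <= d1) by apply Rmin_l. assert (Rmin d1 d2 <= d2) by apply Rmin_r.
  split; [apply H1 | apply H2]; lra.
Qed.

Lemma near0_mono (P Q : R -> Prop) : near0 P -> (forall h, P h -> Q h) -> near0 Q.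
Proof. intros [d [Hd H]] HPQ. exists d. split; auto. Qed.

Lemma near0_nonzero : near0 (fun h => h <> 0).
Proof. exists 1. split; [lra|]. intros h Hh ->. rewrite Rabs_R0 in Hh. lra. Qed.

Definition lim0 (G : R -> R) (l : R) : Prop :=
  forall eps, 0 < eps -> near0 (fun h => Rabs (G h - l) < eps).

Lemma lim0_plus G1 G2 l1 l2 : lim0 G1 l1 -> lim0 G2 l2 -> lim0 (fun h => G1 h + G2 h) (l1 + l2).
Proof.
  intros H1 H2 eps He. apply (near0_mono _ _ (near0_and _ _ (H1 (eps / 2) ltac:(lra)) (H2 (eps / 2) ltac:(lra)))).
  intros h [E1 E2]. replace (G1 h + G2 h - (l1 + l2)) with ((G1 h - l1) + (G2 h - l2)) by ring.
  eapply Rle_lt_trans; [apply Rabs_triang | lra].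
Qed.

Lemma lim0_scal G l a : lim0 G l -> lim0 (fun h => a * G h) (a * l).
Proof.
  intros H eps He. apply (near0_mono _ _ (H (eps / (Rabs a + 1)) ltac:(apply Rdiv_lt_0_compat;
    [lra | pose proof (Rabs_pos a); lra]))).
  intros h E. rewrite <- Rmult_minus_distr_l, Rabs_mult.
  assert (0 <= Rabs a) by apply Rabs_pos.
  apply Rle_lt_trans with ((Rabs a + 1) * Rabs (G h - l)).
  - apply Rmult_le_compat_r; [apply Rabs_pos | lra].
  - apply (Rmult_lt_compat_l (Rabs a + 1)) in E; [| lra].
    replace ((Rabs a + 1) * (eps / (Rabs a + 1))) with eps in E by (field; lra). exact E.
Qed.

Lemma derivable_of_quotient (f G : R -> R) x l :
  near0 (fun h => (f (x + h) - f x) / h = G h) -> lim0 G l -> derivable_pt_lim f x l.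
Proof.
  intros HG Hl eps He. destruct (near0_and _ _ HG (Hl eps He)) as [d [Hd H]].
  exists (mkposreal d Hd). intros h Hh Hhd. destruct (H h) as [E1 E2].
  - split; [apply Rabs_pos_lt; auto | exact Hhd].
  - rewrite E1. exact E2.
Qed.

Definition unif_lim (p0 : R) (F : R -> R -> R) (F0 : R -> R) : Prop :=
  forall eps, 0 < eps ->
    near0 (fun h => forall q, p0 <= q <= 0 -> Rabs (F h q - F0 q) < eps).

Section UniformLimits.

Variable p0 : R.
Hypothesis Hp0 : p0 < 0.

Lemma unif_lim_const (F0 : R -> R) : unif_lim p0 (fun _ => F0) F0.
Proof.
  intros eps He. exists 1. split; [lra|]. intros. rewrite Rminus_diag, Rabs_R0. auto.
Qed.

Lemma unif_lim_ext F G F0 G0 :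
  near0 (fun h => forall q, p0 <= q <= 0 -> F h q = G h q) ->
  (forall q, p0 <= q <= 0 -> F0 q = G0 q) -> unif_lim p0 F F0 -> unif_lim p0 G G0.
Proof.
  intros HFG H0 HU eps Heps. apply (near0_mono _ _ (near0_and _ _ HFG (HU eps Heps))).
  intros h [E H] q Hq. rewrite <- E, <- H0; auto.
Qed.

Lemma unif_lim_plus F G F0 G0 : unif_lim p0 F F0 -> unif_lim p0 G G0 ->
  unif_lim p0 (fun h q => F h q + G h q) (fun q => F0 q + G0 q).
Proof.
  intros HF HG eps He.
  apply (near0_mono _ _ (near0_and _ _ (HF (eps / 2) ltac:(lra)) (HG (eps / 2) ltac:(lra)))).
  intros h [H1 H2] q Hq. specialize (H1 q Hq). specialize (H2 q Hq).
  replace (F h q + G h q - (F0 q + G0 q)) with ((F h q - F0 q) + (G h q - G0 q)) by ring.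
  eapply Rle_lt_trans; [apply Rabs_triang | lra].
Qed.

(* Products converge uniformly when the limits are continuous (hence bounded). *)
Lemma unif_lim_mult F G F0 G0 : (forall x, continuous F0 x) -> (forall x, continuous G0 x) ->
  unif_lim p0 F F0 -> unif_lim p0 G G0 ->
  unif_lim p0 (fun h q => F h q * G h q) (fun q => F0 q * G0 q).
Proof.
  intros HF0 HG0 HF HG eps He.
  destruct (bounded_on_interval F0 p0 0) as [MF [HMF BF]]; [lra | auto |].
  destruct (bounded_on_interval G0 p0 0) as [MG [HMG BG]]; [lra | auto |].
  set (e := Rmin 1 (eps / (2 * (MF + MG + 1)))).
  assert (He0 : 0 < e) by (apply Rmin_glb_lt; [lra | apply Rdiv_lt_0_compat; lra]).
  assert (He1 : e <= 1) by apply Rmin_l.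
  assert (He2 : e <= eps / (2 * (MF + MG + 1))) by apply Rmin_r.
  apply (near0_mono _ _ (near0_and _ _ (HF e He0) (HG e He0))).
  intros h [H1 H2] q Hq. specialize (H1 q Hq). specialize (H2 q Hq).
  specialize (BF q Hq). specialize (BG q Hq).
  replace (F h q * G h q - F0 q * G0 q) with
    ((F h q - F0 q) * (G h q - G0 q) + (F h q - F0 q) * G0 q + F0 q * (G h q - G0 q)) by ring.
  assert (T1 : Rabs ((F h q - F0 q) * (G h q - G0 q)) <= e * e)
    by (rewrite Rabs_mult; apply Rmult_le_compat; try apply Rabs_pos; lra).
  assert (T2 : Rabs ((F h q - F0 q) * G0 q) <= e * MG)
    by (rewrite Rabs_mult; apply Rmult_le_compat; try apply Rabs_pos; lra).
  assert (T3 : Rabs (F0 q * (G h q - G0 q)) <= MF * e)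
    by (rewrite Rabs_mult; apply Rmult_le_compat; try apply Rabs_pos; lra).
  assert (T : e * e + e * MG + MF * e <= e * (MF + MG + 1)) by nra.
  assert (T' : e * (MF + MG + 1) <= eps / 2).
  { apply Rle_trans with (eps / (2 * (MF + MG + 1)) * (MF + MG + 1));
      [apply Rmult_le_compat_r; lra | right; field; lra]. }
  eapply Rle_lt_trans; [apply Rabs_triang|].
  eapply Rle_lt_trans; [apply Rplus_le_compat_r, Rabs_triang | lra].
Qed.

Lemma unif_lim_pow F F0 n : (forall x, continuous F0 x) -> unif_lim p0 F F0 ->
  unif_lim p0 (fun h q => F h q ^ n) (fun q => F0 q ^ n).
Proof.
  intros HF0 HU. induction n; simpl.
  - apply (unif_lim_const (fun _ => 1)).
  - apply (unif_lim_mult F (fun h q => F h q ^ n) F0 (fun q => F0 q ^ n)); auto.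
    intros; cont.
Qed.

Lemma unif_lim_inv F F0 m : 0 < m -> (forall q, p0 <= q <= 0 -> m <= F0 q) ->
  unif_lim p0 F F0 -> unif_lim p0 (fun h q => / F h q) (fun q => / F0 q).
Proof.
  intros Hm HF0 HF eps He.
  set (e := Rmin (m / 2) (eps * m * m / 4)).
  assert (He0 : 0 < e).
  { apply Rmin_glb_lt; [lra|]. apply Rdiv_lt_0_compat; [|lra].
    apply Rmult_lt_0_compat; [apply Rmult_lt_0_compat|]; lra. }
  assert (He1 : e <= m / 2) by apply Rmin_l.
  assert (He2 : e <= eps * m * m / 4) by apply Rmin_r.
  apply (near0_mono _ _ (HF e He0)). intros h H q Hq.
  specialize (H q Hq). specialize (HF0 q Hq).
  apply Rabs_def2 in H. destruct H as [Ha Hb].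
  assert (HFh : m / 2 <= F h q) by lra.
  assert (Hprod : 0 < F h q * F0 q) by (apply Rmult_lt_0_compat; lra).
  replace (/ F h q - / F0 q) with ((F0 q - F h q) / (F h q * F0 q)) by (field; lra).
  rewrite Rabs_div, (Rabs_right (F h q * F0 q)) by lra.
  apply (Rmult_lt_reg_r (F h q * F0 q)); auto.
  unfold Rdiv. rewrite Rmult_assoc, Rinv_l, Rmult_1_r by lra.
  assert (Rabs (F0 q - F h q) < e) by (apply Rabs_def1; lra).
  assert (m / 2 * m <= F h q * F0 q) by (apply Rmult_le_compat; lra).
  assert (eps * (m / 2 * m) <= eps * (F h q * F0 q)) by (apply Rmult_le_compat_l; lra).
  nra.
Qed.

Lemma unif_lim_bounded F F0 : (forall x, continuous F0 x) -> unif_lim p0 F F0 ->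
  exists M, 0 <= M /\ near0 (fun h => forall q, p0 <= q <= 0 -> Rabs (F h q) <= M).
Proof.
  intros HF0 HU. destruct (bounded_on_interval F0 p0 0) as [M [HM BM]]; [lra | auto |].
  exists (M + 1). split; [lra|]. apply (near0_mono _ _ (HU 1 ltac:(lra))).
  intros h H q Hq. specialize (H q Hq). specialize (BM q Hq).
  assert (Rabs (F h q) - Rabs (F0 q) <= Rabs (F h q - F0 q)) by apply Rabs_triang_inv. lra.
Qed.

Lemma unif_lim_pt F F0 q : p0 <= q <= 0 -> unif_lim p0 F F0 -> lim0 (fun h => F h q) (F0 q).
Proof. intros Hq HU eps He. apply (near0_mono _ _ (HU eps He)). auto. Qed.

Lemma unif_lim_RInt F F0 : near0 (fun h => forall x, continuous (F h) x) ->
  (forall x, continuous F0 x) -> unif_lim p0 F F0 ->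
  lim0 (fun h => RInt (F h) p0 0) (RInt F0 p0 0).
Proof.
  intros HFc HF0c HU eps He.
  apply (near0_mono _ _ (near0_and _ _ HFc (HU (eps / (2 * (0 - p0))) ltac:(apply Rdiv_lt_0_compat; lra)))).
  intros h [Hc H]. rewrite <- RInt_minusR by (apply ex_RInt_cont; auto).
  eapply Rle_lt_trans.
  - apply abs_RInt_le_const; [lra | | intros t Ht; left; apply H; auto].
    apply (@ex_RInt_minus R_CompleteNormedModule); apply ex_RInt_cont; auto.
  - replace ((0 - p0) * (eps / (2 * (0 - p0)))) with (eps / 2) by (field; lra). lra.
Qed.

End UniformLimits.

(* The algebraic inequality behind the stability estimate: with u = Z1 - Z2,
   U = W1 - W2 (W the flux) the derivative of u^2 + U^2 is bounded by
   K (u^2 + U^2) plus a term quadratic in the size eps of the perturbation. *)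
Lemma increment_bound u U i1 ma W2 Z2 e1 e2 K Ks eps :
  0 < i1 -> i1 + Rabs ma + 1 <= K -> Rabs W2 <= Ks -> Rabs Z2 <= Ks ->
  Rabs e1 <= eps -> Rabs e2 <= eps ->
  2 * u * (U * i1 + W2 * e1) + 2 * U * (ma * u + e2 * Z2) <=
  K * (u ^ 2 + U ^ 2) + 2 * Ks ^ 2 * eps ^ 2.
Proof.
  intros Hi HK HW HZ He1 He2.
  assert (Hsq : forall x y, Rabs x <= Ks -> Rabs y <= eps -> (x * y) ^ 2 <= Ks ^ 2 * eps ^ 2).
  { intros x y Hx Hy. rewrite Rpow_mult_distr, <- (pow2_abs x), <- (pow2_abs y).
    pose proof (Rabs_pos x). pose proof (Rabs_pos y).
    apply Rmult_le_compat; try apply pow2_ge_0; apply pow_incr; lra. }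
  assert (Hs0 : 0 <= u ^ 2 + U ^ 2) by (pose proof (pow2_ge_0 u); pose proof (pow2_ge_0 U); lra).
  assert (Q1 : 2 * u * U <= u ^ 2 + U ^ 2) by (pose proof (pow2_ge_0 (u - U)); nra).
  assert (Q2 : - (u ^ 2 + U ^ 2) <= 2 * u * U) by (pose proof (pow2_ge_0 (u + U)); nra).
  assert (s1 : 2 * u * U * i1 <= i1 * (u ^ 2 + U ^ 2)) by nra.
  assert (s2 : 2 * u * U * ma <= Rabs ma * (u ^ 2 + U ^ 2))
    by (destruct (Rle_or_lt 0 ma); [rewrite Rabs_right | rewrite Rabs_left]; nra).
  assert (s3 : 2 * u * (W2 * e1) <= u ^ 2 + Ks ^ 2 * eps ^ 2)
    by (pose proof (pow2_ge_0 (u - W2 * e1)); pose proof (Hsq W2 e1 HW He1); nra).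
  assert (s4 : 2 * U * (e2 * Z2) <= U ^ 2 + Ks ^ 2 * eps ^ 2).
  { pose proof (pow2_ge_0 (U - e2 * Z2)). rewrite (Rmult_comm e2).
    pose proof (Hsq Z2 e2 HZ He2). nra. }
  assert ((i1 + Rabs ma + 1) * (u ^ 2 + U ^ 2) <= K * (u ^ 2 + U ^ 2))
    by (apply Rmult_le_compat_r; lra).
  nra.
Qed.

(* [increment_bound] at one point, for the values a_i = A_i(x), z_i = Z_i(x),
   d_i = Z_i'(x) of two solutions: Z1' - Z2' is rewritten through the fluxes
   and mu1 a1 z1 - mu2 a2 z2 through Z1 - Z2. *)
Lemma difference_deriv_bound a1 a2 z1 z2 d1 d2 mu1 mu2 K Ks eps :
  0 < a1 -> 0 < a2 -> / a1 ^ 3 + Rabs (mu1 * a1) + 1 <= K ->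
  Rabs (a2 ^ 3 * d2) <= Ks -> Rabs z2 <= Ks ->
  Rabs (/ a1 ^ 3 - / a2 ^ 3) <= eps -> Rabs (mu1 * a1 - mu2 * a2) <= eps ->
  2 * (z1 - z2) * (d1 - d2) + 2 * (a1 ^ 3 * d1 - a2 ^ 3 * d2) * (mu1 * a1 * z1 - mu2 * a2 * z2)
  <= K * ((z1 - z2) ^ 2 + (a1 ^ 3 * d1 - a2 ^ 3 * d2) ^ 2) + 2 * Ks ^ 2 * eps ^ 2.
Proof.
  intros Ha1 Ha2 HK HW HZ He1 He2.
  replace (d1 - d2) with ((a1 ^ 3 * d1 - a2 ^ 3 * d2) * / a1 ^ 3 + (a2 ^ 3 * d2) * (/ a1 ^ 3 - / a2 ^ 3))
    by (field; lra).
  replace (mu1 * a1 * z1 - mu2 * a2 * z2) with (mu1 * a1 * (z1 - z2) + (mu1 * a1 - mu2 * a2) * z2)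
    by ring.
  apply increment_bound; auto. apply Rinv_0_lt_compat, pow_lt; auto.
Qed.

Lemma abs_le_of_sq_le x e C : x ^ 2 <= e ^ 2 * C -> 0 <= e -> 0 <= C -> Rabs x <= e * sqrt C.
Proof.
  intros H He HC. rewrite <- sqrt_Rsqr_abs, <- (sqrt_Rsqr e) by auto.
  rewrite <- sqrt_mult by (auto; apply Rle_0_sqr). apply sqrt_le_1_alt.
  unfold Rsqr. simpl in H. lra.
Qed.

(* Continuous dependence of the solution on the coefficients (Gronwall):
   if the data (A^-3, mu A and the initial flux A(p0)^3) of two problems
   differ by at most eps on [p0,0], so do Z and the flux A^3 Z', up to a
   constant depending only on bounds for the data. *)
Lemma sol_stability p0 (A1 : R -> R) mu1 (Z1 D1 A2 : R -> R) mu2 (Z2 D2 : R -> R) K Ks eps :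
  p0 < 0 -> ode_sol p0 A1 mu1 Z1 D1 -> ode_sol p0 A2 mu2 Z2 D2 -> 0 < K -> 0 <= Ks -> 0 <= eps ->
  (forall q, p0 <= q <= 0 ->
     / A1 q ^ 3 + Rabs (mu1 * A1 q) + 1 <= K /\
     Rabs (A2 q ^ 3 * D2 q) <= Ks /\ Rabs (Z2 q) <= Ks /\
     Rabs (/ A1 q ^ 3 - / A2 q ^ 3) <= eps /\ Rabs (mu1 * A1 q - mu2 * A2 q) <= eps) ->
  Rabs (A1 p0 ^ 3 - A2 p0 ^ 3) <= eps ->
  forall q, p0 <= q <= 0 ->
    let C := (1 + 2 * Ks ^ 2 / K) * exp (K * (0 - p0)) in
    Rabs (Z1 q - Z2 q) <= eps * sqrt C /\
    Rabs (A1 q ^ 3 * D1 q - A2 q ^ 3 * D2 q) <= eps * sqrt C.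
Proof.
  intros Hp HS1 HS2 HK HKs Heps Hb Hinit q Hq C.
  pose proof HS1 as (HA1 & HA1p & HZ1 & HD1 & HZ01 & HD01 & HdZ1 & HdW1).
  pose proof HS2 as (HA2 & HA2p & HZ2 & HD2 & HZ02 & HD02 & HdZ2 & HdW2).
  set (E := fun q => (Z1 q - Z2 q) ^ 2 + (A1 q ^ 3 * D1 q - A2 q ^ 3 * D2 q) ^ 2).
  set (E' := fun q => 2 * (Z1 q - Z2 q) * (D1 q - D2 q) + 2 * (A1 q ^ 3 * D1 q - A2 q ^ 3 * D2 q)
                      * (mu1 * A1 q * Z1 q - mu2 * A2 q * Z2 q)).
  assert (HC : 0 <= C).
  { unfold C. apply Rmult_le_pos; [| left; apply exp_pos].
    assert (0 <= 2 * Ks ^ 2 / K); [| lra].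
    apply Rmult_le_pos; [pose proof (pow2_ge_0 Ks); lra | left; apply Rinv_0_lt_compat; auto]. }
  assert (HE : E q <= eps ^ 2 * C).
  { replace (eps ^ 2 * C) with ((eps ^ 2 + 2 * Ks ^ 2 * eps ^ 2 / K) * exp (K * (0 - p0)))
      by (unfold C; field; lra).
    apply (gronwall E E' p0 0); auto; try lra.
    - pose proof (pow2_ge_0 Ks). pose proof (pow2_ge_0 eps). nra.
    - apply pow2_ge_0.
    - intros x. unfold E. cont.
    - unfold E. rewrite HZ01, HZ02, HD01, HD02, Rminus_diag, !Rmult_1_r.
      replace ((0:R) ^ 2) with 0 by ring. rewrite Rplus_0_l, <- (pow2_abs (_ - _)).
      pose proof (Rabs_pos (A1 p0 ^ 3 - A2 p0 ^ 3)). apply pow_incr. lra.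
    - intros x Hx. unfold E, E'. eapply derive_eq.
      + apply derive_plus; apply (is_derive_pow _ 2); apply derive_minus;
          [apply HdZ1 | apply HdZ2 | apply HdW1 | apply HdW2]; auto.
      + simpl. ring.
    - intros x Hx. destruct (Hb x Hx) as (B1 & B2 & B3 & B4 & B5). unfold E, E'.
      apply difference_deriv_bound; auto. }
  unfold E in HE. pose proof (pow2_ge_0 (Z1 q - Z2 q)).
  pose proof (pow2_ge_0 (A1 q ^ 3 * D1 q - A2 q ^ 3 * D2 q)).
  split; apply abs_le_of_sq_le; auto; lra.
Qed.

Lemma data_unif_lim p0 (A : R -> R -> R) (mu : R -> R) (Ab : R -> R) mub :
  p0 < 0 -> (forall x, continuous Ab x) -> (forall x, 0 < Ab x) ->
  unif_lim p0 A Ab -> lim0 mu mub ->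
  unif_lim p0 (fun h q => A h q ^ 3) (fun q => Ab q ^ 3) /\
  unif_lim p0 (fun h q => / A h q ^ 3) (fun q => / Ab q ^ 3) /\
  unif_lim p0 (fun h q => mu h * A h q) (fun q => mub * Ab q).
Proof.
  intros Hp HAb HAbp HUA Hmu.
  assert (UA3 := unif_lim_pow p0 Hp A Ab 3 HAb HUA).
  destruct (positive_lower_bound (fun q => Ab q ^ 3) p0 0) as [m [Hm Hmq]];
    [lra | intros; cont | intros; apply pow_lt; auto |].
  split; [| split]; auto.
  - apply (unif_lim_inv p0 _ _ m Hm Hmq UA3).
  - apply (unif_lim_mult p0 Hp (fun h _ => mu h) A (fun _ => mub) Ab); auto.
    + intros; apply cont_const.
    + intros e He. apply (near0_mono _ _ (Hmu e He)). auto.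
Qed.

Lemma sol_unif_lim p0 (A : R -> R -> R) (mu : R -> R) (Z D : R -> R -> R)
    (Ab : R -> R) mub (Zb Db : R -> R) :
  p0 < 0 -> near0 (fun h => ode_sol p0 (A h) (mu h) (Z h) (D h)) ->
  ode_sol p0 Ab mub Zb Db -> unif_lim p0 A Ab -> lim0 mu mub ->
  unif_lim p0 Z Zb /\
  unif_lim p0 (fun h q => A h q ^ 3 * D h q) (fun q => Ab q ^ 3 * Db q).
Proof.
  intros Hp HS HSb HUA Hmu.
  pose proof HSb as (HAb & HAbp & HZb & HDb & _).
  assert (HAb3 : forall x, 0 < Ab x ^ 3) by (intros; apply pow_lt; auto).
  destruct (data_unif_lim p0 A mu Ab mub Hp HAb HAbp HUA Hmu) as (UA3 & UiA3 & UmuA).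
  destruct (unif_lim_bounded p0 Hp _ (fun q => / Ab q ^ 3)
    ltac:(intros x; cont; apply Rgt_not_eq, HAb3) UiA3)
    as [M1 [HM1 B1]].
  destruct (unif_lim_bounded p0 Hp _ (fun q => mub * Ab q) ltac:(intros; cont) UmuA)
    as [M2 [HM2 B2]].
  destruct (bounded_on_interval (fun q => Ab q ^ 3 * Db q) p0 0) as [BW [HBW BWb]];
    [lra | intros; cont |].
  destruct (bounded_on_interval Zb p0 0) as [BZ [HBZ BZb]]; [lra | auto |].
  set (K := M1 + M2 + 1). set (Ks := BW + BZ).
  set (C := (1 + 2 * Ks ^ 2 / K) * exp (K * (0 - p0))).
  assert (Hs : 0 <= sqrt C) by apply sqrt_pos.
  assert (Hboth : forall eps, 0 < eps -> near0 (fun h => forall q, p0 <= q <= 0 ->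
      Rabs (Z h q - Zb q) < eps /\ Rabs (A h q ^ 3 * D h q - Ab q ^ 3 * Db q) < eps)).
  { intros eps Heps.
    set (e := eps / (2 * (sqrt C + 1))).
    assert (He : 0 < e) by (unfold e; apply Rdiv_lt_0_compat; lra).
    assert (HeC : e * sqrt C < eps).
    { unfold e. apply (Rmult_lt_reg_r (2 * (sqrt C + 1))); [lra|].
      replace (eps / (2 * (sqrt C + 1)) * sqrt C * (2 * (sqrt C + 1))) with (eps * sqrt C)
        by (field; lra). nra. }
    apply (near0_mono _ _ (near0_and _ _ HS (near0_and _ _ B1 (near0_and _ _ B2
      (near0_and _ _ (UiA3 e He) (near0_and _ _ (UmuA e He) (UA3 e He))))))).
    intros h (HSh & HB1 & HB2 & E1 & E2 & E3) q Hq.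
    destruct (sol_stability p0 (A h) (mu h) (Z h) (D h) Ab mub Zb Db K Ks e Hp HSh HSb)
      with (q := q) as [S1 S2]; auto; try (unfold K, Ks; lra).
    - intros r Hr. specialize (HB1 r Hr). specialize (HB2 r Hr).
      specialize (BWb r Hr). specialize (BZb r Hr). cbv beta in *.
      pose proof (Rle_abs (/ A h r ^ 3)).
      repeat split; try (left; apply E1 || apply E2; auto); unfold K, Ks; lra.
    - left. apply E3. lra.
    - fold C in S1, S2. split; lra. }
  split; intros eps Heps; apply (near0_mono _ _ (Hboth eps Heps)); intros h H q Hq; apply H; auto.
Qed.

Lemma sol_unif_lim_mu p0 (A : R -> R) (Zm Dm : R -> R -> R) mb :
  p0 < 0 -> (forall mu, ode_sol p0 A mu (Zm mu) (Dm mu)) ->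
  unif_lim p0 (fun h => Zm (mb + h)) (Zm mb).
Proof.
  intros Hp HS.
  apply (sol_unif_lim p0 (fun _ => A) (fun h => mb + h) _ (fun h => Dm (mb + h)) A mb _ (Dm mb)); auto.
  - exists 1. split; [lra | auto].
  - apply unif_lim_const.
  - intros e He. exists e. split; auto. intros h Hh. replace (mb + h - mb) with h by ring. lra.
Qed.

Ltac unif := repeat match goal with
 | |- unif_lim _ (fun h q => @?c q) _ => apply unif_lim_const
 | |- unif_lim _ (fun h q => _ + _) _ => apply unif_lim_plus
 | |- unif_lim _ (fun h q => _ * _) _ => apply unif_lim_mult; [ | intros; cont | intros; cont | | ]
 | |- unif_lim _ (fun h q => _ ^ _) _ => apply unif_lim_pow; [ | intros; cont | ]
 end.

Lemma green_mu p0 (A : R -> R) mu h (Z1 D1 Z2 D2 : R -> R) g sigma :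
  p0 < 0 -> h <> 0 -> Z2 0 <> 0 -> ode_sol p0 A (mu + h) Z1 D1 -> ode_sol p0 A mu Z2 D2 ->
  A 0 ^ 3 * D2 0 = (g + sigma * mu) * Z2 0 ->
  (A 0 ^ 3 * D1 0 - (g + sigma * (mu + h)) * Z1 0) / h =
  / Z2 0 * RInt (fun q => A q * Z1 q * Z2 q) p0 0 + (- sigma) * Z1 0.
Proof.
  intros Hp Hh HZ20 HS1 HS2 Hbc.
  pose proof HS1 as (HA & _ & HZ1 & _). pose proof HS2 as (_ & _ & HZ2 & _).
  assert (G := green_identity p0 A (mu + h) Z1 D1 A mu Z2 D2 Hp HS1 HS2).
  rewrite (RInt_extR _ (fun q => h * (A q * Z1 q * Z2 q))) in G by (intros; ring).
  rewrite RInt_scalR, Hbc in G by (apply ex_RInt_cont; intros; cont).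
  apply (Rmult_eq_reg_r (h * Z2 0)); [| apply Rmult_integral_contrapositive; auto].
  set (I := RInt (fun q => A q * Z1 q * Z2 q) p0 0 : R) in *.
  replace ((/ Z2 0 * I + - sigma * Z1 0) * (h * Z2 0)) with (h * I - sigma * h * Z1 0 * Z2 0)
    by (field; auto).
  replace ((A 0 ^ 3 * D1 0 - (g + sigma * (mu + h)) * Z1 0) / h * (h * Z2 0))
    with (A 0 ^ 3 * D1 0 * Z2 0 - (g + sigma * (mu + h)) * Z1 0 * Z2 0) by (field; auto).
  nra.
Qed.

(* Xi_mu < 0 at a zero of Xi, in terms of a family of solutions Zm mu with a
   fixed coefficient A: by [green_mu] the difference quotient of Xi is
   (1/Z(0)) int A Z_{mu+h} Z_mu - sigma Z_{mu+h}(0), which converges by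
   continuous dependence to (int A Z^2 - sigma Z(0)^2) / Z(0) < 0. *)
Lemma xi_mu_derivative p0 g sigma mb (A : R -> R) (Zm Dm : R -> R -> R) (Xm : R -> R) :
  p0 < 0 -> 0 < g -> 0 < mb ->
  (forall mu, ode_sol p0 A mu (Zm mu) (Dm mu)) ->
  (forall mu, Xm mu = A 0 ^ 3 * Dm mu 0 - (g + sigma * mu) * Zm mu 0) ->
  Xm mb = 0 ->
  RInt (fun q => / A q ^ 3) p0 0 <= / g ->
  exists d, derivable_pt_lim Xm mb d /\ d < 0.
Proof.
  intros Hp Hg Hmb HS HX HX0 HI.
  pose proof (HS mb) as HSb. pose proof HSb as (HA & HAp & HZb & HDb & _).
  set (Zb0 := Zm mb 0).
  assert (HZb0 : 0 < Zb0) by (apply (sol_end_pos p0 mb A (Zm mb) (Dm mb)); auto; lra).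
  assert (Hbc : A 0 ^ 3 * Dm mb 0 = (g + sigma * mb) * Zm mb 0) by (rewrite HX in HX0; lra).
  set (G := fun h => / Zb0 * RInt (fun q => A q * Zm (mb + h) q * Zm mb q) p0 0
                     + (- sigma) * Zm (mb + h) 0).
  assert (Hquot : near0 (fun h => (Xm (mb + h) - Xm mb) / h = G h)).
  { apply (near0_mono _ _ near0_nonzero). intros h Hh. rewrite HX0, HX, Rminus_0_r.
    apply (green_mu p0 A mb h _ (Dm (mb + h)) _ (Dm mb)); auto. apply Rgt_not_eq, HZb0. }
  assert (UZ := sol_unif_lim_mu p0 A Zm Dm mb Hp HS).
  exists (/ Zb0 * RInt (fun q => A q * Zm mb q * Zm mb q) p0 0 + (- sigma) * Zb0). split.
  - apply (derivable_of_quotient _ G); auto.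
    apply lim0_plus; apply lim0_scal.
    + apply (unif_lim_RInt p0 Hp (fun h q => A q * Zm (mb + h) q * Zm mb q)).
      * exists 1. split; [lra|]. intros h _ x. pose proof (HS (mb + h)) as (_ & _ & HZh & _). cont.
      * intros; cont.
      * unif; auto.
    + apply (unif_lim_pt p0 (fun h => Zm (mb + h)) (Zm mb) 0); auto. lra.
  - assert (HN := mu_coefficient_neg p0 A mb (Zm mb) (Dm mb) g sigma Hp Hmb Hg HSb Hbc HI).
    rewrite (RInt_extR _ (fun q => A q * Zm mb q ^ 2)) by (intros; ring).
    fold Zb0 in HN. apply (Rmult_lt_reg_l Zb0); auto.
    replace (Zb0 * (/ Zb0 * RInt (fun q => A q * Zm mb q ^ 2) p0 0 + - sigma * Zb0))
      with (RInt (fun q => A q * Zm mb q ^ 2) p0 0 - sigma * Zb0 ^ 2) by (field; lra).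
    lra.
Qed.

(* The integrand of Green's identity for two coefficients with A1^2 = A2^2 + h
   (two values of lambda differing by h) and the same mu, after division by h. *)
Definition lambda_integrand (mu : R) (A1 Z1 D1 A2 Z2 D2 : R -> R) (q : R) : R :=
  mu * Z1 q * Z2 q / (A1 q + A2 q)
  + (A1 q ^ 2 + A1 q * A2 q + A2 q ^ 2) / (A1 q + A2 q) * D1 q * D2 q.

Lemma green_lambda p0 (A1 A2 : R -> R) mu h (Z1 D1 Z2 D2 : R -> R) c :
  p0 < 0 -> h <> 0 -> Z2 0 <> 0 -> ode_sol p0 A1 mu Z1 D1 -> ode_sol p0 A2 mu Z2 D2 ->
  (forall q, A1 q ^ 2 = A2 q ^ 2 + h) ->
  A2 0 ^ 3 * D2 0 = c * Z2 0 ->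
  (A1 0 ^ 3 * D1 0 - c * Z1 0) / h =
  / Z2 0 * RInt (lambda_integrand mu A1 Z1 D1 A2 Z2 D2) p0 0.
Proof.
  intros Hp Hh HZ20 HS1 HS2 Hsq Hbc.
  pose proof HS1 as (HA1 & HA1p & HZ1 & HD1 & _). pose proof HS2 as (HA2 & HA2p & HZ2 & HD2 & _).
  assert (Hsum : forall q, A1 q + A2 q <> 0) by (intros q; specialize (HA1p q); specialize (HA2p q); lra).
  assert (G := green_identity p0 A1 mu Z1 D1 A2 mu Z2 D2 Hp HS1 HS2).
  rewrite (RInt_extR _ (fun q => h * lambda_integrand mu A1 Z1 D1 A2 Z2 D2 q)) in G.
  - rewrite RInt_scalR, Hbc in G by (apply ex_RInt_cont; intros; unfold lambda_integrand, Rdiv; cont).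
    set (I := RInt (lambda_integrand mu A1 Z1 D1 A2 Z2 D2) p0 0 : R) in *.
    apply (Rmult_eq_reg_r (h * Z2 0)); [| apply Rmult_integral_contrapositive; auto].
    replace (/ Z2 0 * I * (h * Z2 0)) with (h * I) by (field; auto). rewrite <- G. field; auto.
  - intros q. unfold lambda_integrand.
    replace h with (A1 q ^ 2 - A2 q ^ 2) by (rewrite Hsq; ring). field. auto.
Qed.

(* If A h > 0 and A h^2 = Ab^2 + h with Ab >= m > 0, then A h -> Ab uniformly,
   since |A h - Ab| = |h| / (A h + Ab) <= |h| / m. *)
Lemma unif_lim_sqrt_shift p0 (A : R -> R -> R) (Ab : R -> R) m : 0 < m ->
  (forall q, p0 <= q <= 0 -> m <= Ab q) ->
  near0 (fun h => forall q, p0 <= q <= 0 -> 0 < A h q /\ A h q ^ 2 = Ab q ^ 2 + h) ->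
  unif_lim p0 A Ab.
Proof.
  intros Hm Hmq [d0 [Hd0 HA]] eps He. exists (Rmin d0 (eps * m)). split.
  { apply Rmin_glb_lt; auto. apply Rmult_lt_0_compat; auto. }
  intros h Hh q Hq. assert (Rmin d0 (eps * m) <= d0) by apply Rmin_l.
  assert (Rmin d0 (eps * m) <= eps * m) by apply Rmin_r.
  destruct (HA h ltac:(lra) q Hq) as [H1 H2]. specialize (Hmq q Hq).
  replace (A h q - Ab q) with (h / (A h q + Ab q))
    by (field_simplify_eq; [simpl in H2; nra | lra]).
  rewrite Rabs_div, (Rabs_right (A h q + Ab q)) by lra.
  apply (Rmult_lt_reg_r (A h q + Ab q)); [lra|].
  unfold Rdiv. rewrite Rmult_assoc, Rinv_l, Rmult_1_r by lra. nra.
Qed.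

Lemma lambda_integrand_diag mu (A Z D : R -> R) q : 0 < A q ->
  lambda_integrand mu A Z D A Z D q = mu * Z q ^ 2 / (2 * A q) + 3 / 2 * A q * D q ^ 2.
Proof. intros HA. unfold lambda_integrand. field. lra. Qed.

Lemma lambda_integrand_diag_nonneg mu (A Z D : R -> R) q : 0 < mu -> 0 < A q ->
  0 <= lambda_integrand mu A Z D A Z D q.
Proof.
  intros Hmu HA. rewrite lambda_integrand_diag by auto.
  assert (0 <= mu * Z q ^ 2 / (2 * A q)).
  { apply Rmult_le_pos; [apply Rmult_le_pos; [lra | apply pow2_ge_0] |].
    left; apply Rinv_0_lt_compat; lra. }
  pose proof (pow2_ge_0 (D q)). nra.
Qed.

Lemma lambda_integrand_diag_pos mu (A Z D : R -> R) q : 0 < mu -> 0 < A q -> Z q <> 0 ->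
  0 < lambda_integrand mu A Z D A Z D q.
Proof.
  intros Hmu HA HZ. rewrite lambda_integrand_diag by auto.
  assert (0 < mu * Z q ^ 2 / (2 * A q)).
  { apply Rmult_lt_0_compat; [apply Rmult_lt_0_compat; [lra | apply pow2_gt_0; auto] |].
    apply Rinv_0_lt_compat; lra. }
  pose proof (pow2_ge_0 (D q)). nra.
Qed.

(* Continuous dependence for the lambda-perturbation: if A h^2 = Ab^2 + h,
   the integrand of [green_lambda] converges uniformly to its value at h = 0.
   Z' is recovered from the flux as (A^3 Z') / A^3. *)
Lemma lambda_integrand_unif_lim p0 mu (A Z D : R -> R -> R) (Ab Zb Db : R -> R) :
  p0 < 0 -> near0 (fun h => ode_sol p0 (A h) mu (Z h) (D h)) -> ode_sol p0 Ab mu Zb Db ->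
  near0 (fun h => forall x, A h x ^ 2 = Ab x ^ 2 + h) ->
  unif_lim p0 (fun h => lambda_integrand mu (A h) (Z h) (D h) Ab Zb Db)
    (lambda_integrand mu Ab Zb Db Ab Zb Db).
Proof.
  intros Hp HS HSb Hsq. pose proof HSb as (HAb & HAbp & HZb & HDb & _).
  destruct (positive_lower_bound Ab p0 0) as [m [Hm Hmq]]; [lra | auto | intros; auto |].
  assert (Hsum : forall x, Ab x + Ab x <> 0) by (intros x; specialize (HAbp x); lra).
  assert (UA : unif_lim p0 A Ab).
  { apply (unif_lim_sqrt_shift p0 _ Ab m); auto.
    apply (near0_mono _ _ (near0_and _ _ HS Hsq)). intros h [HSh Hsqh] q Hq.
    destruct HSh as (_ & HAp & _). auto. }
  destruct (sol_unif_lim p0 A (fun _ => mu) Z D Ab mu Zb Db) as [UZ UW]; auto.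
  { intros e He. exists 1. split; [lra|]. intros. rewrite Rminus_diag, Rabs_R0. auto. }
  assert (UiA3 : unif_lim p0 (fun h q => / A h q ^ 3) (fun q => / Ab q ^ 3)).
  { apply (unif_lim_inv p0 (fun h q => A h q ^ 3) (fun q => Ab q ^ 3) (m ^ 3)).
    - apply pow_lt; auto.
    - intros q Hq. apply pow_incr. split; [lra | auto].
    - apply unif_lim_pow; auto. }
  assert (UD : unif_lim p0 D Db).
  { apply (unif_lim_ext p0 (fun h q => A h q ^ 3 * D h q * / A h q ^ 3)
             _ (fun q => Ab q ^ 3 * Db q * / Ab q ^ 3)).
    - apply (near0_mono _ _ HS). intros h HSh q _. destruct HSh as (_ & HAp & _).
      field. apply Rgt_not_eq, HAp.
    - intros q _. field. apply Rgt_not_eq, HAbp.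
    - apply unif_lim_mult; auto; intros; cont. apply Rgt_not_eq, pow_lt; auto. }
  assert (Uinv : unif_lim p0 (fun h q => / (A h q + Ab q)) (fun q => / (Ab q + Ab q))).
  { apply (unif_lim_inv p0 (fun h q => A h q + Ab q) (fun q => Ab q + Ab q) (2 * m)).
    - lra.
    - intros q Hq. specialize (Hmq q Hq). lra.
    - apply unif_lim_plus; auto. apply (unif_lim_const p0 Ab). }
  unfold lambda_integrand, Rdiv. unif; auto.
Qed.

(* Xi_lambda > 0 at a zero of Xi, in terms of a family of coefficients
   Al (lb + h) with Al (lb + h)^2 = Al lb^2 + h and solutions Zl: by
   [green_lambda] the difference quotient of Xi is (1/Z(0)) times the
   integral of [lambda_integrand], which converges to the integral of a
   nonnegative integrand that is positive at 0. *)
Lemma xi_lambda_derivative p0 c mb lb (Al Zl Dl : R -> R -> R) (Xl : R -> R) :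
  p0 < 0 -> 0 < mb ->
  ode_sol p0 (Al lb) mb (Zl lb) (Dl lb) ->
  near0 (fun h => ode_sol p0 (Al (lb + h)) mb (Zl (lb + h)) (Dl (lb + h))) ->
  near0 (fun h => forall x, Al (lb + h) x ^ 2 = Al lb x ^ 2 + h) ->
  Al lb 0 ^ 3 * Dl lb 0 = c * Zl lb 0 -> Xl lb = 0 ->
  near0 (fun h => Xl (lb + h) = Al (lb + h) 0 ^ 3 * Dl (lb + h) 0 - c * Zl (lb + h) 0) ->
  exists d, derivable_pt_lim Xl lb d /\ 0 < d.
Proof.
  intros Hp Hmb HSb HS Hsq Hbc HX0 HX.
  pose proof HSb as (HAb & HAbp & HZb & HDb & _).
  set (Ab := Al lb) in *. set (Zb := Zl lb) in *. set (Db := Dl lb) in *.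
  set (F := fun h => lambda_integrand mb (Al (lb + h)) (Zl (lb + h)) (Dl (lb + h)) Ab Zb Db).
  set (F0 := lambda_integrand mb Ab Zb Db Ab Zb Db).
  assert (HZb0 : 0 < Zb 0) by (apply (sol_end_pos p0 mb Ab Zb Db); auto; lra).
  assert (HF0c : forall x, continuous F0 x).
  { intros x. unfold F0, lambda_integrand, Rdiv. cont; intro; specialize (HAbp x); lra. }
  assert (Hquot : near0 (fun h => (Xl (lb + h) - Xl lb) / h = / Zb 0 * RInt (F h) p0 0)).
  { apply (near0_mono _ _ (near0_and _ _ near0_nonzero (near0_and _ _ HS (near0_and _ _ Hsq HX)))).
    intros h (Hh & HSh & Hsqh & HXh). rewrite HX0, HXh, Rminus_0_r.
    apply (green_lambda p0 _ Ab mb h); auto. apply Rgt_not_eq, HZb0. }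
  exists (/ Zb 0 * RInt F0 p0 0). split.
  - apply (derivable_of_quotient _ _ _ _ Hquot), lim0_scal, (unif_lim_RInt p0 Hp F F0).
    + apply (near0_mono _ _ HS). intros h HSh x. destruct HSh as (HA & HAp & HZ & HD & _).
      unfold F, lambda_integrand, Rdiv. cont; specialize (HAp x); specialize (HAbp x); intro; lra.
    + exact HF0c.
    + apply (lambda_integrand_unif_lim p0 mb (fun h => Al (lb + h))); auto.
  - apply Rmult_lt_0_compat; [apply Rinv_0_lt_compat; auto |].
    apply (RInt_pos_of_pos_point F0 p0 0 0); auto; try lra.
    + intros q _. apply lambda_integrand_diag_nonneg; auto.
    + apply lambda_integrand_diag_pos; auto. lra.
Qed.

(* Projection of R onto [a,b]; composing with it extends functions given on
   [a,b] to continuous functions on R. *)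
Definition clamp (a b x : R) : R := Rmax a (Rmin b x).

Lemma clamp_in a b x : a <= b -> a <= clamp a b x <= b.
Proof. intros H. unfold clamp. split; [apply Rmax_l | apply Rmax_lub; [lra | apply Rmin_l]]. Qed.

Lemma clamp_id a b x : a <= x <= b -> clamp a b x = x.
Proof. intros H. unfold clamp. rewrite Rmin_right, Rmax_right by lra. auto. Qed.

Lemma clamp_lip a b x y : a <= b -> Rabs (clamp a b x - clamp a b y) <= Rabs (x - y).
Proof. intros H. unfold clamp, Rmax, Rmin. repeat destruct Rle_dec; split_Rabs; lra. Qed.

Lemma clamp_locally_id a b x : a < x < b -> locally x (fun t => clamp a b t = t).
Proof.
  intros Hx. assert (Hr : 0 < Rmin (x - a) (b - x)) by (apply Rmin_glb_lt; lra).
  exists (mkposreal _ Hr). intros y Hy. change (Rabs (y - x) < Rmin (x - a) (b - x)) in Hy.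
  assert (Rmin (x - a) (b - x) <= x - a) by apply Rmin_l.
  assert (Rmin (x - a) (b - x) <= b - x) by apply Rmin_r.
  apply Rabs_def2 in Hy. apply clamp_id. lra.
Qed.

Definition cont_on (f : R -> R) (a b : R) : Prop :=
  forall p, a <= p <= b -> forall eps, 0 < eps -> exists d, 0 < d /\
    forall y, a <= y <= b -> Rabs (y - p) < d -> Rabs (f y - f p) < eps.

Lemma cont_on_clamp (f : R -> R) a b : a <= b -> cont_on f a b ->
  forall x, continuous (fun t => f (clamp a b t)) x.
Proof.
  intros Hab H x. apply continuous_eps_delta. intros eps He.
  destruct (H (clamp a b x) (clamp_in a b x Hab) eps He) as [d [Hd H']].
  exists d. split; auto. intros y Hy. apply H'; [apply clamp_in; auto |].
  eapply Rle_lt_trans; [apply clamp_lip | exact Hy]; auto.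
Qed.

Lemma cont_on_limit1_in (f : R -> R) a b :
  (forall p, a <= p <= b -> limit1_in f (fun x => a <= x <= b) (f p) p) -> cont_on f a b.
Proof.
  intros H p Hp eps He. destruct (H p Hp eps He) as [d [Hd H']].
  exists d. split; auto. intros y Hy Hyp.
  destruct (Req_dec y p) as [->|]; [rewrite Rminus_diag, Rabs_R0; auto |].
  apply (H' y). split; auto.
Qed.

Lemma cont_on_lipschitz (f : R -> R) a b M : 0 <= M ->
  (forall x y, a <= x <= b -> a <= y <= b -> Rabs (f x - f y) <= M * Rabs (x - y)) ->
  cont_on f a b.
Proof.
  intros HM H p Hp eps He. exists (eps / (M + 1)). split; [apply Rdiv_lt_0_compat; lra |].
  intros y Hy Hyp. eapply Rle_lt_trans; [apply H; auto |].
  pose proof (Rabs_pos (y - p)).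
  apply Rle_lt_trans with ((M + 1) * Rabs (y - p)); [nra |].
  apply (Rmult_lt_compat_l (M + 1)) in Hyp; [| lra].
  replace ((M + 1) * (eps / (M + 1))) with eps in Hyp by (field; lra). exact Hyp.
Qed.

Lemma cont_on_holder alpha (f : R -> R) a b : 0 < alpha -> holder alpha f a b -> cont_on f a b.
Proof.
  intros Ha [C HC] p Hp eps He.
  set (C' := Rabs C + 1).
  assert (HC' : 0 < C') by (unfold C'; pose proof (Rabs_pos C); lra).
  set (d := Rpower (eps / C') (/ alpha)).
  assert (Hdd : Rpower d alpha = eps / C').
  { unfold d. rewrite Rpower_mult, Rinv_l by lra. apply Rpower_1, Rdiv_lt_0_compat; lra. }
  exists d. split; [unfold d, Rpower; apply exp_pos |]. intros y Hy Hyp.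
  destruct (Req_dec y p) as [->|Hne]; [rewrite Rminus_diag, Rabs_R0; auto |].
  assert (Hpos : 0 < Rabs (y - p)) by (apply Rabs_pos_lt; lra).
  assert (H2 : Rpower (Rabs (y - p)) alpha < eps / C')
    by (rewrite <- Hdd; apply Rlt_Rpower_l; auto).
  assert (H3 : 0 < Rpower (Rabs (y - p)) alpha) by (unfold Rpower; apply exp_pos).
  assert (C <= Rabs C) by apply Rle_abs.
  eapply Rle_lt_trans; [apply HC; auto |].
  apply Rle_lt_trans with (C' * Rpower (Rabs (y - p)) alpha); [apply Rmult_le_compat_r; unfold C'; lra |].
  apply (Rmult_lt_compat_l C') in H2; auto.
  replace (C' * (eps / C')) with eps in H2 by (field; lra). exact H2.
Qed.

Lemma ex_RInt_sub (f : R -> R) lo hi a b :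
  ex_RInt f lo hi -> lo <= a <= hi -> lo <= b <= hi -> ex_RInt f a b.
Proof.
  intros H Ha Hb.
  assert (H1 : ex_RInt f lo a) by (apply (ex_RInt_Chasles_1 f lo a hi); auto; lra).
  assert (H2 : ex_RInt f lo b) by (apply (ex_RInt_Chasles_1 f lo b hi); auto; lra).
  apply (ex_RInt_Chasles f a lo b); [apply ex_RInt_swap |]; auto.
Qed.

Lemma gam_integrable_bounded p0 p1 g1 g2 alpha :
  p0 < p1 -> p1 < 0 -> 0 < alpha -> holder alpha g1 p0 p1 -> holder alpha g2 p1 0 ->
  ex_RInt (gam p1 g1 g2) p0 0 /\
  exists M, 0 <= M /\ forall x, p0 <= x <= 0 -> Rabs (gam p1 g1 g2 x) <= M.
Proof.
  intros H01 H1 Ha Hg1 Hg2.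
  assert (C1 := cont_on_clamp g1 p0 p1 ltac:(lra) (cont_on_holder alpha g1 p0 p1 Ha Hg1)).
  assert (C2 := cont_on_clamp g2 p1 0 ltac:(lra) (cont_on_holder alpha g2 p1 0 Ha Hg2)).
  split.
  - apply (ex_RInt_Chasles _ p0 p1 0).
    + apply (ex_RInt_ext (fun t => g1 (clamp p0 p1 t))); [| apply ex_RInt_cont; auto].
      intros x Hx. rewrite Rmin_left, Rmax_right in Hx by lra.
      unfold gam. destruct (Rlt_dec x p1); [rewrite clamp_id; lra | lra].
    + apply (ex_RInt_ext (fun t => g2 (clamp p1 0 t))); [| apply ex_RInt_cont; auto].
      intros x Hx. rewrite Rmin_left, Rmax_right in Hx by lra.
      unfold gam. destruct (Rlt_dec x p1); [lra | rewrite clamp_id; lra].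
  - destruct (bounded_on_interval _ p0 p1 ltac:(lra) C1) as [M1 [HM1 B1]].
    destruct (bounded_on_interval _ p1 0 ltac:(lra) C2) as [M2 [HM2 B2]].
    exists (M1 + M2). split; [lra |]. intros x Hx. unfold gam. destruct (Rlt_dec x p1).
    + specialize (B1 x ltac:(lra)). rewrite clamp_id in B1 by lra. lra.
    + specialize (B2 x ltac:(lra)). rewrite clamp_id in B2 by lra. lra.
Qed.

(* Gamma(0) = 0, so that a(0; lambda) = sqrt lambda. *)
Lemma Gam0 p1 g1 g2 : Gam p1 g1 g2 0 = 0.
Proof. unfold Gam. rewrite Defs_RInt_eq by apply ex_RInt_point. rewrite RInt_point. reflexivity. Qed.

Lemma Gam_lipschitz p0 p1 g1 g2 M p q : ex_RInt (gam p1 g1 g2) p0 0 ->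
  (forall x, p0 <= x <= 0 -> Rabs (gam p1 g1 g2 x) <= M) ->
  p0 <= p <= 0 -> p0 <= q <= 0 -> Rabs (Gam p1 g1 g2 p - Gam p1 g1 g2 q) <= M * Rabs (p - q).
Proof.
  intros Hi HM Hp Hq. unfold Gam.
  rewrite !Defs_RInt_eq by (apply (ex_RInt_sub _ p0 0); auto; lra).
  rewrite <- (RInt_Chasles (gam p1 g1 g2) 0 q p) by (apply (ex_RInt_sub _ p0 0); auto; lra).
  unfold plus; simpl. set (I1 := RInt (gam p1 g1 g2) 0 q : R).
  set (I2 := RInt (gam p1 g1 g2) q p : R). replace (I1 + I2 - I1) with I2 by ring. unfold I2.
  assert (Hsub : forall a b, p0 <= a <= b -> b <= 0 -> Rabs (RInt (gam p1 g1 g2) a b) <= M * (b - a)).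
  { intros a b Ha Hb. rewrite Rmult_comm. apply abs_RInt_le_const; [lra | | intros; apply HM; lra].
    apply (ex_RInt_sub _ p0 0); auto; lra. }
  destruct (Rle_dec q p).
  - rewrite (Rabs_right (p - q)) by lra. apply Hsub; lra.
  - rewrite <- opp_RInt_swap by (apply (ex_RInt_sub _ p0 0); auto; lra).
    unfold opp; simpl. rewrite Rabs_Ropp, (Rabs_left (p - q)) by lra.
    replace (- (p - q)) with (q - p) by ring. apply Hsub; lra.
Qed.

(* lambda^{3/2} = (sqrt lambda)^3, relating Xi to the flux a(0)^3 z'(0). *)
Lemma Rpower_3_2 l : 0 < l -> Rpower l (3 / 2) = sqrt l ^ 3.
Proof.
  intros Hl. replace (3 / 2) with (1 + / 2) by field.
  rewrite Rpower_plus, Rpower_1, Rpower_sqrt by auto. simpl.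
  rewrite Rmult_1_r, <- Rmult_assoc, sqrt_sqrt by lra. ring.
Qed.

Lemma admissible_mono p0 p1 g1 g2 lam lam' :
  admissible p0 p1 g1 g2 lam -> lam <= lam' -> admissible p0 p1 g1 g2 lam'.
Proof. intros Had Hle p Hp. specialize (Had p Hp). lra. Qed.

Section Dispersion.

Variables (g sigma p0 p1 alpha : R) (g1 g2 : R -> R) (z dz : R -> R -> R -> R).
Hypotheses (Hg : 0 < g) (H01 : p0 < p1) (H1 : p1 < 0) (Halpha : 0 < alpha)
  (Hg1 : holder alpha g1 p0 p1) (Hg2 : holder alpha g2 p1 0)
  (Hz : forall lam mu, admissible p0 p1 g1 g2 lam ->
          is_zsol p0 (aa p1 g1 g2 lam) mu (z lam mu) (dz lam mu)).

Definition a_ext (lam x : R) : R := aa p1 g1 g2 lam (clamp p0 0 x).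
Definition z_ext (lam mu x : R) : R := z lam mu (clamp p0 0 x).
Definition dz_ext (lam mu x : R) : R := dz lam mu (clamp p0 0 x).

Lemma a_ext_props lam : admissible p0 p1 g1 g2 lam ->
  (forall x, continuous (a_ext lam) x) /\ (forall x, 0 < a_ext lam x) /\
  (forall x, a_ext lam x ^ 2 = lam - 2 * Gam p1 g1 g2 (clamp p0 0 x)).
Proof.
  intros Had.
  destruct (gam_integrable_bounded p0 p1 g1 g2 alpha) as [Hi [M [HM0 HM]]]; auto.
  assert (Hpos : forall x, 0 < lam - 2 * Gam p1 g1 g2 (clamp p0 0 x))
    by (intros x; specialize (Had _ (clamp_in p0 0 x ltac:(lra))); lra).
  unfold a_ext, aa. split; [| split].
  - intros x. apply (continuous_sqrt_comp (fun t => lam - 2 * Gam p1 g1 g2 (clamp p0 0 t))).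
    apply cont_minus; [apply cont_const | apply cont_mult; [apply cont_const |]].
    apply cont_on_clamp; [lra |]. apply (cont_on_lipschitz _ p0 0 M HM0).
    intros; apply (Gam_lipschitz p0); auto.
  - intros x. apply sqrt_lt_R0. auto.
  - intros x. apply pow2_sqrt. left; auto.
Qed.

Lemma ext_sol lam mu : admissible p0 p1 g1 g2 lam ->
  ode_sol p0 (a_ext lam) mu (z_ext lam mu) (dz_ext lam mu).
Proof.
  intros Had. destruct (Hz lam mu Had) as (Hz0 & Hd0 & Hzc & Hdc & Hdz & Hdw).
  destruct (a_ext_props lam Had) as (HAc & HAp & _).
  assert (Hp0 : clamp p0 0 p0 = p0) by (apply clamp_id; lra).
  unfold ode_sol, z_ext, dz_ext. rewrite Hp0.
  do 6 (split; [first [solve [auto] | apply cont_on_clamp; [lra | apply cont_on_limit1_in; auto]] |]).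
  split.
  - intros p Hp. rewrite (clamp_id p0 0 p) by lra.
    apply (is_derive_ext_loc (z lam mu)).
    + apply (filter_imp (fun t => clamp p0 0 t = t)); [| apply clamp_locally_id; auto].
      intros t Ht. rewrite Ht. reflexivity.
    + apply is_derive_Reals. auto.
  - intros p Hp. unfold a_ext. rewrite (clamp_id p0 0 p) by lra.
    apply (is_derive_ext_loc (fun q => aa p1 g1 g2 lam q ^ 3 * dz lam mu q)).
    + apply (filter_imp (fun t => clamp p0 0 t = t)); [| apply clamp_locally_id; auto].
      intros t Ht. rewrite Ht. reflexivity.
    + apply is_derive_Reals. auto.
Qed.

(* Xi in terms of the extended functions: a(0; lambda) = sqrt lambda since
   Gamma(0) = 0, so lambda^{3/2} = a(0)^3. *)
Lemma Xi_ext lam mu : admissible p0 p1 g1 g2 lam ->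
  Xi g sigma z dz lam mu = a_ext lam 0 ^ 3 * dz_ext lam mu 0 - (g + sigma * mu) * z_ext lam mu 0.
Proof.
  intros Had. assert (Hlam := Had 0 ltac:(lra)). rewrite Gam0 in Hlam.
  unfold Xi, a_ext, z_ext, dz_ext, aa. rewrite clamp_id, Gam0, Rmult_0_r, Rminus_0_r by lra.
  rewrite Rpower_3_2 by lra. reflexivity.
Qed.

Lemma admissible_near lb : admissible p0 p1 g1 g2 lb ->
  near0 (fun h => admissible p0 p1 g1 g2 (lb + h)).
Proof.
  intros Had. destruct (a_ext_props lb Had) as (HAc & HAp & HAsq).
  destruct (positive_lower_bound (fun x => a_ext lb x ^ 2) p0 0) as [m [Hm Hmq]];
    [lra | intros; cont | intros; apply pow2_gt_0, Rgt_not_eq, HAp |].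
  exists m. split; auto. intros h Hh p Hp. specialize (Hmq p Hp).
  rewrite HAsq, clamp_id in Hmq by lra. destruct Hh as [_ Hh]. apply Rabs_def2 in Hh. lra.
Qed.

(* For lambda >= lambda0, a(.; lambda) >= a(.; lambda0), so by the definition of
   lambda0 the integral of a^-3 is at most 1/g. *)
Lemma inv_cube_integral_le lam0 lb : admissible p0 p1 g1 g2 lam0 ->
  / g = Defs.RInt (fun p => / (aa p1 g1 g2 lam0 p) ^ 3) p0 0 -> lam0 <= lb ->
  RInt (fun q => / a_ext lb q ^ 3) p0 0 <= / g.
Proof.
  intros Had0 Hlam0 Hlb.
  assert (Hadb := admissible_mono p0 p1 g1 g2 lam0 lb Had0 Hlb).
  destruct (a_ext_props lb Hadb) as (HAc & HAp & _).
  destruct (a_ext_props lam0 Had0) as (HAc0 & HAp0 & _).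
  assert (Hinv : forall lam, (forall x, continuous (a_ext lam) x) -> (forall x, 0 < a_ext lam x) ->
            ex_RInt (fun q => / a_ext lam q ^ 3) p0 0).
  { intros lam Hc Hp. apply ex_RInt_cont. intros x. cont. apply Rgt_not_eq, pow_lt, Hp. }
  rewrite Hlam0, Defs_RInt_eq.
  - apply RInt_le; [lra | apply Hinv; auto | |].
    + apply (ex_RInt_ext (fun q => / a_ext lam0 q ^ 3)); [| apply Hinv; auto].
      intros x Hx. rewrite Rmin_left, Rmax_right in Hx by lra.
      unfold a_ext. rewrite clamp_id by lra. reflexivity.
    + intros x Hx. specialize (HAp0 x). unfold a_ext in *. rewrite clamp_id in * by lra.
      apply Rinv_le_contravar; [apply pow_lt; auto |]. apply pow_incr.
      split; [lra |]. unfold aa. apply sqrt_le_1_alt. lra.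
  - apply (ex_RInt_ext (fun q => / a_ext lam0 q ^ 3)); [| apply Hinv; auto].
    intros x Hx. rewrite Rmin_left, Rmax_right in Hx by lra.
    unfold a_ext. rewrite clamp_id by lra. reflexivity.
Qed.

Lemma Xi_lambda_pos lb mb : admissible p0 p1 g1 g2 lb -> 0 < mb -> Xi g sigma z dz lb mb = 0 ->
  exists d, derivable_pt_lim (fun l => Xi g sigma z dz l mb) lb d /\ 0 < d.
Proof.
  intros Had Hmb HX0. assert (Hnear := admissible_near lb Had).
  apply (xi_lambda_derivative p0 (g + sigma * mb) mb lb a_ext (fun l => z_ext l mb) (fun l => dz_ext l mb));
    auto; try lra.
  - apply ext_sol; auto.
  - apply (near0_mono _ _ Hnear). intros h Hh. apply ext_sol; auto.
  - apply (near0_mono _ _ Hnear). intros h Hh x.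
    destruct (a_ext_props _ Hh) as (_ & _ & ->). destruct (a_ext_props _ Had) as (_ & _ & ->). ring.
  - rewrite Xi_ext in HX0 by auto. lra.
  - apply (near0_mono _ _ Hnear). intros h Hh. apply Xi_ext; auto.
Qed.

Lemma Xi_mu_neg lam0 lb mb : admissible p0 p1 g1 g2 lam0 ->
  / g = Defs.RInt (fun p => / (aa p1 g1 g2 lam0 p) ^ 3) p0 0 ->
  lam0 <= lb -> 0 < mb -> Xi g sigma z dz lb mb = 0 ->
  exists d, derivable_pt_lim (fun m => Xi g sigma z dz lb m) mb d /\ d < 0.
Proof.
  intros Had0 Hlam0 Hlb Hmb HX0.
  assert (Had := admissible_mono p0 p1 g1 g2 lam0 lb Had0 Hlb).
  apply (xi_mu_derivative p0 g sigma mb (a_ext lb) (z_ext lb) (dz_ext lb)); auto; try lra.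
  - intros mu. apply ext_sol; auto.
  - intros mu. apply Xi_ext; auto.
  - apply (inv_cube_integral_le lam0); auto.
Qed.

End Dispersion.

(* The theorem: both signs at a zero (lb, mb) of Xi with lb >= lambda0, mb > 0. *)
Theorem lemma4p4 (g sigma p0 p1 alpha : R) (g1 g2 : R -> R)
  (z dz : R -> R -> R -> R) (lam0 lb mb : R) :
  0 < g -> 0 < sigma -> p0 < p1 -> p1 < 0 -> 0 < alpha < 1 ->
  holder alpha g1 p0 p1 -> holder alpha g2 p1 0 ->
  (forall lam mu, admissible p0 p1 g1 g2 lam ->
     is_zsol p0 (aa p1 g1 g2 lam) mu (z lam mu) (dz lam mu)) ->
  admissible p0 p1 g1 g2 lam0 ->
  / g = Defs.RInt (fun p => / (aa p1 g1 g2 lam0 p) ^ 3) p0 0 ->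
  lam0 <= lb -> 0 < mb -> Xi g sigma z dz lb mb = 0 ->
  (exists d, derivable_pt_lim (fun l => Xi g sigma z dz l mb) lb d /\ 0 < d) /\
  (exists d, derivable_pt_lim (fun m => Xi g sigma z dz lb m) mb d /\ d < 0).
Proof.
  intros Hg Hsigma H01 H1 Halpha Hg1 Hg2 Hz Had0 Hlam0 Hlb Hmb HX0.
  assert (Had := admissible_mono p0 p1 g1 g2 lam0 lb Had0 Hlb).
  split.
  - apply (Xi_lambda_pos g sigma p0 p1 alpha g1 g2 z dz); auto; lra.
  - apply (Xi_mu_neg g sigma p0 p1 alpha g1 g2 z dz) with lam0; auto; lra.
Qed.
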